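(* For $|q|<1$, \begin{align*} \phi(q)+\sum_{r=1}^{\infty}(-1;q^2)_rq^r&=\sum_{n=-\infty}^{\infty}\frac{q^{n^2}}{(-q^2;q^2)_n}=\frac{(-q,-q,q^2;q^2)_{\infty}}{(q,-q^2;q^2)_{\infty}},\\ \nu(q)+\sum_{r=0}^{\infty}(-q;q^2)_rq^r&=\sum_{n=-\infty}^{\infty}\frac{q^{n^2+n}}{(-q;q^2)_{n+1}}=2(-q^2,-q^2;q^2)_{\infty}(q^4;q^4)_{\infty},\\ \psi(q)+\sum_{r=0}^{\infty}(q;q^2)_r(-1)^r&=\sum_{n=-\infty}^{\infty}\frac{q^{n^2}}{(q;q^2)_n}=\frac{(-q,-q,q^2;q^2)_{\infty}}{2(q,-q^2;q^2)_{\infty}}, \end{align*} where in the third identity the series $\sum_{r\ge0}(q;q^2)_r(-1)^r$ (equivalently the part of the bilateral series with negative index) is summed in the Cesàro sense.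
   Context: For $n\ge 0$, $(a;q)_n=\prod_{j=0}^{n-1}(1-aq^j)$, $(a;q)_\infty=\prod_{j\ge0}(1-aq^j)$, and for negative index $(a;q)_{-n}=1/(aq^{-n};q)_n$. Also $(a_1,\dots,a_k;q)_n=(a_1;q)_n\cdots(a_k;q)_n$ (same for $n=\infty$). Third order mock theta functions: $\phi(q)=\sum_{n\ge0}\frac{q^{n^2}}{(-q^2;q^2)_n}$, $\psi(q)=\sum_{n\ge1}\frac{q^{n^2}}{(q;q^2)_n}$, $\nu(q)=\sum_{n\ge0}\frac{q^{n^2+n}}{(-q;q^2)_{n+1}}$. *)

From Stdlib Require Import Reals ZArith.
Open Scope R_scope.

Record Cplx : Type := mkC { Re : R; Im : R }.

Definition Czero : Cplx := mkC 0 0.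
Definition Cone : Cplx := mkC 1 0.
Definition RtoC (x : R) : Cplx := mkC x 0.
Definition Cadd (z w : Cplx) : Cplx := mkC (Re z + Re w) (Im z + Im w).
Definition Copp (z : Cplx) : Cplx := mkC (- Re z) (- Im z).
Definition Csub (z w : Cplx) : Cplx := Cadd z (Copp w).
Definition Cmul (z w : Cplx) : Cplx :=
  mkC (Re z * Re w - Im z * Im w) (Re z * Im w + Im z * Re w).
Definition Cnorm2 (z : Cplx) : R := Re z * Re z + Im z * Im z.
(* Cinv 0 = 0 by the (irrelevant here) total convention *)
Definition Cinv (z : Cplx) : Cplx := mkC (Re z / Cnorm2 z) (- Im z / Cnorm2 z).
Definition Cdiv (z w : Cplx) : Cplx := Cmul z (Cinv w).
Definition Cnorm (z : Cplx) : R := sqrt (Cnorm2 z).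
Fixpoint Cpow (z : Cplx) (n : nat) : Cplx :=
  match n with O => Cone | S k => Cmul z (Cpow z k) end.

Definition Ccv (u : nat -> Cplx) (l : Cplx) : Prop :=
  forall eps : R, eps > 0 -> exists N : nat, forall n : nat, (n >= N)%nat ->
    Cnorm (Csub (u n) l) < eps.

Fixpoint Csum (f : nat -> Cplx) (N : nat) : Cplx :=
  match N with O => f O | S k => Cadd (Csum f k) (f (S k)) end.

Definition Cser (f : nat -> Cplx) (l : Cplx) : Prop := Ccv (Csum f) l.

(* the series sum_{k>=0} f k is Cesaro summable to l:
   the arithmetic means of the partial sums converge to l *)
Definition Ccesaro (f : nat -> Cplx) (l : Cplx) : Prop :=
  Ccv (fun N => Cmul (RtoC (/ INR (S N))) (Csum (Csum f) N)) l.

Fixpoint qpoch (a q : Cplx) (n : nat) : Cplx :=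
  match n with
  | O => Cone
  | S k => Cmul (qpoch a q k) (Csub Cone (Cmul a (Cpow q k)))
  end.

Definition qpochZ (a q : Cplx) (n : Z) : Cplx :=
  match n with
  | Z0 => Cone
  | Zpos p => qpoch a q (Pos.to_nat p)
  | Zneg p => Cinv (qpoch (Cmul a (Cpow (Cinv q) (Pos.to_nat p))) q (Pos.to_nat p))
  end.

Definition qpinf (a q l : Cplx) : Prop := Ccv (qpoch a q) l.

Definition phi_term (q : Cplx) (n : nat) : Cplx :=
  Cdiv (Cpow q (n * n)) (qpoch (Copp (Cpow q 2)) (Cpow q 2) n).
(* psi(q) = sum_{n>=1}: shifted index n = k+1 *)
Definition psi_term (q : Cplx) (k : nat) : Cplx :=
  Cdiv (Cpow q (S k * S k)) (qpoch q (Cpow q 2) (S k)).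
Definition nu_term (q : Cplx) (n : nat) : Cplx :=
  Cdiv (Cpow q (n * n + n)) (qpoch (Copp q) (Cpow q 2) (S n)).

Definition bil1 (q : Cplx) (n : Z) : Cplx :=
  Cdiv (Cpow q (Z.to_nat (n * n))) (qpochZ (Copp (Cpow q 2)) (Cpow q 2) n).
Definition bil2 (q : Cplx) (n : Z) : Cplx :=
  Cdiv (Cpow q (Z.to_nat (n * n + n))) (qpochZ (Copp q) (Cpow q 2) (n + 1)).
Definition bil3 (q : Cplx) (n : Z) : Cplx :=
  Cdiv (Cpow q (Z.to_nat (n * n))) (qpochZ q (Cpow q 2) n).

From Stdlib Require Import Reals ZArith Lra Lia Psatz Field ClassicalEpsilon.
From Coquelicot Require Complex.
Open Scope R_scope.

(* All three are specializations, with p = q^2, of one object: for |p| < 1, z <> 0 and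
   |b| < min(1, |z|), the bilateral series
       U(b,z) = sum_(n in Z) (-z)^n p^(n(n-1)/2) / (b;p)_n,
   split into its positive half (pos_term) and negative half (neg_term).  Comparing
   terms gives the contiguous relation U(b,z) (1 - b) (1 - b/z) = U(bp,z); iterating it
   and letting b p^N -> 0 under dominated convergence yields
       U(b,z) (b;p)_oo (b/z;p)_oo = theta(z) := U(0,z),
   and the case b = p, where the negative half vanishes, is Jacobi's triple product
   theta(z) = (z;p)_oo (p;p)_oo (p/z;p)_oo.  Infinite products are constructed as the
   sums qinf p x of Euler's series, which satisfy qinf p x = (1 - x) qinf p (px).

   A dictionary then identifies
   the mock theta series, the r-series and the bilateral series of the statement with
   halves of U(-q^2,-q), U(-q^3,-q^2)/(1+q) and U(q,-q).  For the third identity the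
   negative half of U(q,-q) diverges; its consecutive terms pair up into the
   convergent series U(q^3,-q)/(1-q), which gives its Cesaro sum. *)

Lemma Cplx_ext (z w : Cplx) : Re z = Re w -> Im z = Im w -> z = w.
Proof. destruct z, w; simpl; intros; subst; reflexivity. Qed.

Ltac cplx_ring := intros; repeat match goal with z : Cplx |- _ => destruct z end;
  apply Cplx_ext; unfold Cadd, Cmul, Csub, Copp, Czero, Cone, RtoC; simpl; ring.

Lemma Cring_theory : ring_theory Czero Cone Cadd Cmul Csub Copp (@eq Cplx).
Proof. constructor; cplx_ring. Qed.

Lemma Cinv_l (z : Cplx) : z <> Czero -> Cmul (Cinv z) z = Cone.
Proof.
  destruct z as [a b]; intro H; unfold Cinv, Cmul, Cnorm2, Cone; simpl.
  assert (a * a + b * b <> 0).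
  { intro E. apply H. assert (a = 0) by nra. assert (b = 0) by nra. subst. reflexivity. }
  apply Cplx_ext; simpl; field; auto.
Qed.

Lemma Cone_neq_Czero : Cone <> Czero.
Proof. intro E; injection E; lra. Qed.

Lemma Cfield_theory : field_theory Czero Cone Cadd Cmul Csub Copp Cdiv Cinv (@eq Cplx).
Proof.
  constructor; [exact Cring_theory | exact Cone_neq_Czero | reflexivity | exact Cinv_l].
Qed.

Lemma Cpow_add (x : Cplx) (a b : nat) : Cpow x (a + b) = Cmul (Cpow x a) (Cpow x b).
Proof. induction a; simpl; [|rewrite IHa]; cplx_ring. Qed.

Lemma C_power_theory : power_theory Cone Cmul (@eq Cplx) N.to_nat Cpow.
Proof.
  constructor. destruct n as [|p]; [reflexivity|]. simpl. induction p.
  - rewrite Pos2Nat.inj_xI. simpl. rewrite Nat.add_0_r, Cpow_add, IHp. reflexivity.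
  - rewrite Pos2Nat.inj_xO. simpl. rewrite Nat.add_0_r, Cpow_add, IHp. reflexivity.
  - simpl. cplx_ring.
Qed.

Ltac Cpow_tac t :=
  match isnatcst t with
  | false => constr:(InitialRing.NotConstant)
  | _ => constr:(N.of_nat t)
  end.

Add Field CField : Cfield_theory (power_tac C_power_theory [Cpow_tac]).

Lemma Cdiv_of_mul (U X Y : Cplx) : X <> Czero -> Cmul U X = Y -> U = Cdiv Y X.
Proof. intros HX E. subst. field. auto. Qed.

Lemma Cinv_one : Cinv Cone = Cone.
Proof. field. exact Cone_neq_Czero. Qed.

Lemma two_neq_Czero : Cadd Cone Cone <> Czero.
Proof. intro E; injection E; lra. Qed.

Lemma Copp_one_neq_Czero : Copp Cone <> Czero.
Proof. intro E; injection E; lra. Qed.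

Lemma Cpow_mul (a b : Cplx) (k : nat) : Cpow (Cmul a b) k = Cmul (Cpow a k) (Cpow b k).
Proof. induction k; simpl; [|rewrite IHk]; ring. Qed.

Lemma Cpow_pow (a : Cplx) (m n : nat) : Cpow a (m * n) = Cpow (Cpow a m) n.
Proof.
  revert m; induction n; intros m; [rewrite Nat.mul_0_r; reflexivity|].
  rewrite Nat.mul_succ_r, Cpow_add, IHn. simpl. ring.
Qed.

Lemma Cpow_one (k : nat) : Cpow Cone k = Cone.
Proof. induction k; simpl; [|rewrite IHk]; ring. Qed.

Lemma Cpow_cancel (x : Cplx) (a b : nat) :
  x <> Czero -> Cmul (Cpow x a) (Cpow (Cinv x) (a + b)) = Cpow (Cinv x) b.
Proof.
  intros Hx. rewrite Cpow_add. induction a; simpl; [ring|].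
  transitivity (Cmul (Cmul x (Cinv x)) (Cmul (Cpow x a) (Cmul (Cpow (Cinv x) a) (Cpow (Cinv x) b)))).
  - ring.
  - rewrite IHa. field. auto.
Qed.

Lemma Cpow_cancel0 (x : Cplx) (j : nat) : x <> Czero -> Cmul (Cpow x j) (Cpow (Cinv x) j) = Cone.
Proof. intros Hx. pose proof (Cpow_cancel x j 0 Hx) as E. rewrite Nat.add_0_r in E. exact E. Qed.

Lemma Cinv_opp (x : Cplx) : Copp (Cinv (Copp x)) = Cinv x.
Proof.
  destruct x as [a b]. apply Cplx_ext; unfold Cinv, Cnorm2, Copp; simpl;
  replace (-a * -a + -b * -b) with (a * a + b * b) by ring; unfold Rdiv; ring.
Qed.

Lemma Cinv_inv (x : Cplx) : Cinv (Cinv x) = x.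
Proof.
  destruct (Req_dec (Cnorm2 x) 0) as [E|E].
  - destruct x as [a b]. unfold Cnorm2 in E; simpl in E.
    assert (a = 0) by nra. assert (b = 0) by nra. subst.
    apply Cplx_ext; unfold Cinv, Cnorm2; simpl; unfold Rdiv; ring.
  - assert (Hx : x <> Czero) by (intro F; subst; apply E; unfold Cnorm2; simpl; ring).
    assert (Hix : Cinv x <> Czero).
    { intro F. assert (G : Cmul (Cinv x) x = Czero) by (rewrite F; ring).
      rewrite Cinv_l in G by auto. exact (Cone_neq_Czero G). }
    transitivity (Cmul (Cinv (Cinv x)) (Cmul (Cinv x) x)).
    + rewrite Cinv_l by auto. ring.
    + transitivity (Cmul (Cmul (Cinv (Cinv x)) (Cinv x)) x); [ring|].
      rewrite Cinv_l by auto. ring.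
Qed.

Lemma RtoC_plus (x y : R) : RtoC (x + y) = Cadd (RtoC x) (RtoC y).
Proof. apply Cplx_ext; simpl; ring. Qed.

Lemma RtoC_mul (x y : R) : RtoC (x * y) = Cmul (RtoC x) (RtoC y).
Proof. apply Cplx_ext; simpl; ring. Qed.

Lemma RtoC_2 : RtoC 2 = Cadd Cone Cone.
Proof. apply Cplx_ext; simpl; ring. Qed.

Lemma RtoC_half : RtoC (/ 2) = Cinv (Cadd Cone Cone).
Proof. apply Cplx_ext; unfold Cinv, Cnorm2; simpl; field. Qed.

Lemma half_double (x : Cplx) : Cmul (RtoC (/ 2)) (Cadd x x) = x.
Proof. destruct x; apply Cplx_ext; simpl; field. Qed.

Definition toC (z : Cplx) : Complex.C := (Re z, Im z).

Lemma Cnorm_Cmod (z : Cplx) : Cnorm z = Complex.Cmod (toC z).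
Proof. destruct z; unfold Cnorm, Complex.Cmod, Cnorm2, toC; simpl. f_equal; ring. Qed.

Lemma Cnorm_ge0 (z : Cplx) : 0 <= Cnorm z.
Proof. apply sqrt_pos. Qed.

Lemma Cnorm_triangle (z w : Cplx) : Cnorm (Cadd z w) <= Cnorm z + Cnorm w.
Proof. rewrite !Cnorm_Cmod. exact (Complex.Cmod_triangle (toC z) (toC w)). Qed.

Lemma Cnorm_mul (z w : Cplx) : Cnorm (Cmul z w) = Cnorm z * Cnorm w.
Proof. rewrite !Cnorm_Cmod. exact (Complex.Cmod_mult (toC z) (toC w)). Qed.

Lemma Cnorm_opp (z : Cplx) : Cnorm (Copp z) = Cnorm z.
Proof. destruct z; unfold Cnorm, Cnorm2, Copp; simpl; f_equal; ring. Qed.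

Lemma Cnorm_zero : Cnorm Czero = 0.
Proof. unfold Cnorm, Cnorm2, Czero; simpl. replace (0 * 0 + 0 * 0) with 0 by ring. apply sqrt_0. Qed.

Lemma Cnorm_one : Cnorm Cone = 1.
Proof. unfold Cnorm, Cnorm2, Cone; simpl. replace (1 * 1 + 0 * 0) with 1 by ring. apply sqrt_1. Qed.

Lemma Cnorm_RtoC (r : R) : Cnorm (RtoC r) = Rabs r.
Proof. unfold Cnorm, Cnorm2, RtoC; simpl. rewrite <- sqrt_Rsqr_abs. unfold Rsqr. f_equal; ring. Qed.

Lemma Cnorm_eq0 (z : Cplx) : Cnorm z = 0 -> z = Czero.
Proof.
  rewrite Cnorm_Cmod. intro H. apply Complex.Cmod_eq_0 in H.
  destruct z; unfold toC in H; simpl in H. injection H; intros; subst; reflexivity.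
Qed.

Lemma Cnorm_pos (z : Cplx) : z <> Czero -> 0 < Cnorm z.
Proof. intro H. destruct (Cnorm_ge0 z); auto. exfalso; apply H, Cnorm_eq0; auto. Qed.

Lemma Cnorm_pow (z : Cplx) (n : nat) : Cnorm (Cpow z n) = Cnorm z ^ n.
Proof. induction n; simpl; [apply Cnorm_one | rewrite Cnorm_mul, IHn; reflexivity]. Qed.

Lemma Cnorm_sub (z w : Cplx) : Cnorm (Csub z w) = Cnorm (Csub w z).
Proof. replace (Csub z w) with (Copp (Csub w z)) by ring. apply Cnorm_opp. Qed.

Lemma Cnorm_inv (z : Cplx) : z <> Czero -> Cnorm (Cinv z) = / Cnorm z.
Proof.
  intro H. assert (E : Cnorm (Cmul (Cinv z) z) = 1) by (rewrite Cinv_l; auto; apply Cnorm_one).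
  rewrite Cnorm_mul in E. pose proof (Cnorm_pos z H).
  apply (Rmult_eq_reg_r (Cnorm z)); [|lra]. rewrite E, Rinv_l; lra.
Qed.

Lemma Cnorm_rev (z w : Cplx) : Cnorm z - Cnorm w <= Cnorm (Cadd z w).
Proof.
  pose proof (Cnorm_triangle (Cadd z w) (Copp w)) as H. rewrite Cnorm_opp in H.
  replace (Cadd (Cadd z w) (Copp w)) with z in H by ring. lra.
Qed.

Lemma Cnorm_sub_tri (a b c : Cplx) : Cnorm (Csub a c) <= Cnorm (Csub a b) + Cnorm (Csub b c).
Proof. replace (Csub a c) with (Cadd (Csub a b) (Csub b c)) by ring. apply Cnorm_triangle. Qed.

Lemma Re_le (z : Cplx) : Rabs (Re z) <= Cnorm z.
Proof. rewrite Cnorm_Cmod. apply (Complex.re_le_Cmod (toC z)). Qed.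

Lemma Im_le (z : Cplx) : Rabs (Im z) <= Cnorm z.
Proof.
  destruct z as [a b]. unfold Cnorm, Cnorm2; simpl. rewrite <- sqrt_Rsqr_abs.
  apply sqrt_le_1_alt. unfold Rsqr; nra.
Qed.

Lemma Cnorm_le_comp (z : Cplx) : Cnorm z <= Rabs (Re z) + Rabs (Im z).
Proof.
  destruct z as [a b]. unfold Cnorm, Cnorm2; simpl.
  pose proof (Rabs_pos a); pose proof (Rabs_pos b).
  rewrite <- (sqrt_Rsqr (Rabs a + Rabs b)) by lra. apply sqrt_le_1_alt. unfold Rsqr.
  assert (Rabs a * Rabs a = a * a) by (rewrite <- Rabs_mult; apply Rabs_right; nra).
  assert (Rabs b * Rabs b = b * b) by (rewrite <- Rabs_mult; apply Rabs_right; nra).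
  nra.
Qed.

Lemma Cpow_neq0 (a : Cplx) (k : nat) : a <> Czero -> Cpow a k <> Czero.
Proof.
  intros H E. assert (Cnorm (Cpow a k) = 0) as N by (rewrite E; apply Cnorm_zero).
  rewrite Cnorm_pow in N. revert N. apply pow_nonzero. intro F. apply H, Cnorm_eq0; auto.
Qed.

Lemma Cmul_neq0 (a b : Cplx) : a <> Czero -> b <> Czero -> Cmul a b <> Czero.
Proof.
  intros Ha Hb E. assert (Cnorm (Cmul a b) = 0) as N by (rewrite E; apply Cnorm_zero).
  rewrite Cnorm_mul in N. apply Rmult_integral in N.
  destruct N; [apply Ha | apply Hb]; apply Cnorm_eq0; auto.
Qed.

Lemma one_sub_neq0 (a : Cplx) : Cnorm a < 1 -> Csub Cone a <> Czero.
Proof.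
  intros H E. assert (Cone = a) as F.
  { replace Cone with (Cadd (Csub Cone a) a) by ring. rewrite E. ring. }
  rewrite <- F, Cnorm_one in H. lra.
Qed.

Lemma one_add_neq0 (a : Cplx) : Cnorm a < 1 -> Cadd Cone a <> Czero.
Proof. intro H. replace (Cadd Cone a) with (Csub Cone (Copp a)) by ring. apply one_sub_neq0. rewrite Cnorm_opp; auto. Qed.

Lemma pow_le1 (th : R) (n : nat) : 0 <= th <= 1 -> th ^ n <= 1.
Proof. intros. rewrite <- (pow1 n). apply pow_incr; lra. Qed.

Lemma Cnorm_pow_le1 (p : Cplx) (k : nat) : Cnorm p < 1 -> Cnorm (Cpow p k) <= 1.
Proof. intros. rewrite Cnorm_pow. apply pow_le1. pose proof (Cnorm_ge0 p); lra. Qed.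

Lemma Cnorm_mul_pow_le (p b : Cplx) (N : nat) : Cnorm p < 1 -> Cnorm (Cmul (Cpow p N) b) <= Cnorm b.
Proof.
  intros Hp. rewrite Cnorm_mul. pose proof (Cnorm_pow_le1 p N Hp). pose proof (Cnorm_ge0 b).
  pose proof (Cnorm_ge0 (Cpow p N)). nra.
Qed.

Lemma Ccv_unique (u : nat -> Cplx) (l1 l2 : Cplx) : Ccv u l1 -> Ccv u l2 -> l1 = l2.
Proof.
  intros H1 H2. destruct (Req_dec (Cnorm (Csub l1 l2)) 0) as [E|E].
  - apply Cnorm_eq0 in E. replace l1 with (Cadd (Csub l1 l2) l2) by ring. rewrite E. ring.
  - pose proof (Cnorm_ge0 (Csub l1 l2)). set (e := Cnorm (Csub l1 l2)) in *.
    destruct (H1 (e / 2)) as [N1 HN1]; [lra|]. destruct (H2 (e / 2)) as [N2 HN2]; [lra|].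
    specialize (HN1 (N1 + N2)%nat ltac:(lia)). specialize (HN2 (N1 + N2)%nat ltac:(lia)).
    pose proof (Cnorm_sub_tri l1 (u (N1 + N2)%nat) l2) as T.
    rewrite (Cnorm_sub l1 (u _)) in T. unfold e in *. lra.
Qed.

Lemma Ccv_const (c : Cplx) : Ccv (fun _ => c) c.
Proof.
  intros e He. exists 0%nat. intros. replace (Csub c c) with Czero by ring.
  rewrite Cnorm_zero; lra.
Qed.

Lemma Ccv_ext_ev (u v : nat -> Cplx) (l : Cplx) (K : nat) :
  (forall n, (n >= K)%nat -> u n = v n) -> Ccv u l -> Ccv v l.
Proof.
  intros E H e He. destruct (H e He) as [N HN]. exists (N + K)%nat. intros n Hn.
  rewrite <- E by lia. apply HN; lia.
Qed.

Lemma Ccv_ext (u v : nat -> Cplx) (l : Cplx) : (forall n, u n = v n) -> Ccv u l -> Ccv v l.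
Proof. intros. apply (Ccv_ext_ev u v l 0); auto. Qed.

Lemma Ccv_eq (u : nat -> Cplx) (l l' : Cplx) : Ccv u l -> l = l' -> Ccv u l'.
Proof. intros; subst; auto. Qed.

Lemma Ccv_add (u v : nat -> Cplx) (a b : Cplx) :
  Ccv u a -> Ccv v b -> Ccv (fun n => Cadd (u n) (v n)) (Cadd a b).
Proof.
  intros H1 H2 e He. destruct (H1 (e / 2)) as [N1 HN1]; [lra|].
  destruct (H2 (e / 2)) as [N2 HN2]; [lra|]. exists (N1 + N2)%nat. intros n Hn.
  replace (Csub (Cadd (u n) (v n)) (Cadd a b)) with (Cadd (Csub (u n) a) (Csub (v n) b)) by ring.
  pose proof (Cnorm_triangle (Csub (u n) a) (Csub (v n) b)).
  specialize (HN1 n ltac:(lia)). specialize (HN2 n ltac:(lia)). lra.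
Qed.

Lemma Ccv_scal (u : nat -> Cplx) (a c : Cplx) : Ccv u a -> Ccv (fun n => Cmul c (u n)) (Cmul c a).
Proof.
  intros H e He. pose proof (Cnorm_ge0 c).
  destruct (H (e / (Cnorm c + 1))) as [N HN]; [apply Rdiv_lt_0_compat; lra|].
  exists N. intros n Hn.
  replace (Csub (Cmul c (u n)) (Cmul c a)) with (Cmul c (Csub (u n) a)) by ring.
  rewrite Cnorm_mul. specialize (HN n Hn). pose proof (Cnorm_ge0 (Csub (u n) a)).
  apply Rle_lt_trans with ((Cnorm c + 1) * Cnorm (Csub (u n) a)); [nra|].
  replace e with ((Cnorm c + 1) * (e / (Cnorm c + 1))) by (field; lra).
  apply Rmult_lt_compat_l; lra.
Qed.

Lemma Ccv_sub (u v : nat -> Cplx) (a b : Cplx) :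
  Ccv u a -> Ccv v b -> Ccv (fun n => Csub (u n) (v n)) (Csub a b).
Proof.
  intros Hu Hv. apply Ccv_add; auto.
  apply (Ccv_ext (fun n => Cmul (Copp Cone) (v n))); [intros; ring|].
  replace (Copp b) with (Cmul (Copp Cone) b) by ring. apply Ccv_scal; auto.
Qed.

Lemma Ccv_bounded (u : nat -> Cplx) (l : Cplx) : Ccv u l -> exists B, forall n, Cnorm (u n) <= B.
Proof.
  intro H. destruct (H 1 ltac:(lra)) as [N HN].
  assert (Hinit : forall m, exists B, forall n, (n <= m)%nat -> Cnorm (u n) <= B).
  { induction m as [|m [B HB]].
    - exists (Cnorm (u 0%nat)). intros n Hn. replace n with 0%nat by lia. lra.
    - exists (Rmax B (Cnorm (u (S m)))). intros n Hn.
      destruct (Nat.eq_dec n (S m)); [subst; apply Rmax_r|].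
      eapply Rle_trans; [apply HB; lia | apply Rmax_l]. }
  destruct (Hinit N) as [B HB]. exists (Rmax B (Cnorm l + 1)). intros n.
  destruct (le_lt_dec n N); [eapply Rle_trans; [apply HB; auto | apply Rmax_l]|].
  eapply Rle_trans; [|apply Rmax_r]. specialize (HN n ltac:(lia)).
  pose proof (Cnorm_triangle (Csub (u n) l) l) as T.
  replace (Cadd (Csub (u n) l) l) with (u n) in T by ring. lra.
Qed.

Lemma Ccv_mul (u v : nat -> Cplx) (a b : Cplx) :
  Ccv u a -> Ccv v b -> Ccv (fun n => Cmul (u n) (v n)) (Cmul a b).
Proof.
  intros H1 H2.
  apply (Ccv_ext (fun n => Cadd (Cmul (u n) (Csub (v n) b)) (Cmul b (u n)))); [intros; ring|].
  replace (Cmul a b) with (Cadd Czero (Cmul b a)) by ring. apply Ccv_add; [|apply Ccv_scal; auto].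
  destruct (Ccv_bounded u a H1) as [B HB]. intros e He. pose proof (Rabs_pos B).
  destruct (H2 (e / (Rabs B + 1))) as [N HN]; [apply Rdiv_lt_0_compat; lra|].
  exists N. intros n Hn.
  replace (Csub (Cmul (u n) (Csub (v n) b)) Czero) with (Cmul (u n) (Csub (v n) b)) by ring.
  rewrite Cnorm_mul. specialize (HN n Hn). specialize (HB n). pose proof (Cnorm_ge0 (u n)).
  pose proof (Cnorm_ge0 (Csub (v n) b)). pose proof (Rle_abs B).
  apply Rle_lt_trans with ((Rabs B + 1) * Cnorm (Csub (v n) b)); [nra|].
  replace e with ((Rabs B + 1) * (e / (Rabs B + 1))) by (field; lra).
  apply Rmult_lt_compat_l; lra.
Qed.

Lemma Ccv_pow (u : nat -> Cplx) (l : Cplx) (k : nat) :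
  Ccv u l -> Ccv (fun N => Cpow (u N) k) (Cpow l k).
Proof. intro H. induction k; simpl; [apply Ccv_const | apply Ccv_mul; auto]. Qed.

Lemma Ccv_shift (u : nat -> Cplx) (l : Cplx) : Ccv u l -> Ccv (fun n => u (S n)) l.
Proof. intros H e He. destruct (H e He) as [N HN]. exists N. intros; apply HN; lia. Qed.

Lemma Ccv_unshift (u : nat -> Cplx) (l : Cplx) : Ccv (fun n => u (S n)) l -> Ccv u l.
Proof.
  intros H e He. destruct (H e He) as [N HN]. exists (S N). intros [|n] Hn; [lia|]. apply HN; lia.
Qed.

Lemma Ccv_subseq (u : nat -> Cplx) (l : Cplx) (f : nat -> nat) :
  (forall n, (n <= f n)%nat) -> Ccv u l -> Ccv (fun n => u (f n)) l.
Proof.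
  intros Hf H e He. destruct (H e He) as [N HN]. exists N. intros n Hn.
  apply HN. specialize (Hf n); lia.
Qed.

Lemma Ccv_norm_le (u : nat -> Cplx) (l c : Cplx) (B : R) (K : nat) :
  Ccv u l -> (forall n, (n >= K)%nat -> Cnorm (Csub (u n) c) <= B) -> Cnorm (Csub l c) <= B.
Proof.
  intros H HB. apply Rnot_lt_le. intro Hlt.
  set (e := Cnorm (Csub l c) - B). destruct (H e ltac:(unfold e; lra)) as [N HN].
  specialize (HN (N + K)%nat ltac:(lia)). specialize (HB (N + K)%nat ltac:(lia)).
  pose proof (Cnorm_sub_tri l (u (N + K)%nat) c) as T. rewrite (Cnorm_sub l (u _)) in T.
  unfold e in HN. lra.
Qed.

Lemma Ccv_norm_ge (u : nat -> Cplx) (l : Cplx) (c : R) :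
  Ccv u l -> (forall n, c <= Cnorm (u n)) -> c <= Cnorm l.
Proof.
  intros H Hc. apply Rnot_lt_le. intro Hlt.
  set (e := c - Cnorm l). destruct (H e ltac:(unfold e; lra)) as [N HN].
  specialize (HN N ltac:(lia)). specialize (Hc N).
  pose proof (Cnorm_triangle (Csub (u N) l) l) as T.
  replace (Cadd (Csub (u N) l) l) with (u N) in T by ring. unfold e in HN. lra.
Qed.

Lemma Ccv_inv (u : nat -> Cplx) (l : Cplx) :
  Ccv u l -> l <> Czero -> Ccv (fun n => Cinv (u n)) (Cinv l).
Proof.
  intros H Hl. pose proof (Cnorm_pos l Hl) as Hp. set (m := Cnorm l) in *.
  destruct (H (m / 2) ltac:(lra)) as [N0 HN0].
  assert (Hlow : forall n, (n >= N0)%nat -> m / 2 <= Cnorm (u n)).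
  { intros n Hn. specialize (HN0 n Hn). pose proof (Cnorm_triangle (Csub l (u n)) (u n)) as T.
    replace (Cadd (Csub l (u n)) (u n)) with l in T by ring. rewrite Cnorm_sub in T. fold m in T. lra. }
  intros e He. destruct (H (e * (m * m / 2))) as [N1 HN1]; [apply Rmult_lt_0_compat; nra|].
  exists (N0 + N1)%nat. intros n Hn. specialize (Hlow n ltac:(lia)). specialize (HN1 n ltac:(lia)).
  assert (Hun : u n <> Czero) by (intro E; rewrite E, Cnorm_zero in Hlow; lra).
  replace (Csub (Cinv (u n)) (Cinv l)) with (Cmul (Csub l (u n)) (Cinv (Cmul (u n) l))) by (field; auto).
  rewrite Cnorm_mul, Cnorm_inv, Cnorm_mul, Cnorm_sub by (apply Cmul_neq0; auto). fold m.
  apply Rlt_le_trans with ((e * (m * m / 2)) * / (Cnorm (u n) * m)).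
  { apply Rmult_lt_compat_r; auto. apply Rinv_0_lt_compat; nra. }
  apply Rle_trans with ((e * (m * m / 2)) * / (m / 2 * m)).
  { apply Rmult_le_compat_l; [nra|]. apply Rinv_le_contravar; nra. }
  right. field. lra.
Qed.

Lemma Rpow_cv0 (r : R) : 0 <= r < 1 -> forall e, e > 0 -> exists N, forall n, (n >= N)%nat -> r ^ n < e.
Proof.
  intros Hr e He. destruct (pow_lt_1_zero r ltac:(rewrite Rabs_right; lra) e He) as [N HN].
  exists N. intros n Hn. specialize (HN n Hn). rewrite Rabs_right in HN; auto.
  apply Rle_ge, pow_le; lra.
Qed.

Lemma Ccv_geometric (p x : Cplx) : Cnorm p < 1 -> Ccv (fun N => Cmul (Cpow p N) x) Czero.
Proof.
  intros Hp e He. pose proof (Cnorm_ge0 p). pose proof (Cnorm_ge0 x).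
  destruct (Rpow_cv0 (Cnorm p) ltac:(lra) (e / (Cnorm x + 1))) as [N HN];
    [apply Rdiv_lt_0_compat; lra|].
  exists N. intros n Hn. specialize (HN n Hn).
  replace (Csub (Cmul (Cpow p n) x) Czero) with (Cmul (Cpow p n) x) by ring.
  rewrite Cnorm_mul, Cnorm_pow. assert (0 <= Cnorm p ^ n) by (apply pow_le; lra).
  apply Rle_lt_trans with (Cnorm p ^ n * (Cnorm x + 1)); [nra|].
  replace e with (e / (Cnorm x + 1) * (Cnorm x + 1)) by (field; lra).
  apply Rmult_lt_compat_r; lra.
Qed.

Definition CCauchy (u : nat -> Cplx) : Prop := forall eps, eps > 0 -> exists N, forall n m,
  (n >= N)%nat -> (m >= N)%nat -> Cnorm (Csub (u n) (u m)) < eps.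

(* Completeness, componentwise from that of R. *)
Lemma C_complete (u : nat -> Cplx) : CCauchy u -> { l | Ccv u l }.
Proof.
  intro H.
  assert (H1 : Cauchy_crit (fun n => Re (u n))).
  { intros e He. destruct (H e He) as [N HN]. exists N. intros n m Hn Hm. unfold Rdist.
    eapply Rle_lt_trans; [|apply (HN n m Hn Hm)]. pose proof (Re_le (Csub (u n) (u m))) as T.
    destruct (u n), (u m); simpl in *. exact T. }
  assert (H2 : Cauchy_crit (fun n => Im (u n))).
  { intros e He. destruct (H e He) as [N HN]. exists N. intros n m Hn Hm. unfold Rdist.
    eapply Rle_lt_trans; [|apply (HN n m Hn Hm)]. pose proof (Im_le (Csub (u n) (u m))) as T.
    destruct (u n), (u m); simpl in *. exact T. }
  destruct (R_complete _ H1) as [a Ha]. destruct (R_complete _ H2) as [b Hb].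
  exists (mkC a b). intros e He. destruct (Ha (e / 2) ltac:(lra)) as [N1 HN1].
  destruct (Hb (e / 2) ltac:(lra)) as [N2 HN2]. exists (N1 + N2)%nat. intros n Hn.
  specialize (HN1 n ltac:(lia)). specialize (HN2 n ltac:(lia)). unfold Rdist in *.
  pose proof (Cnorm_le_comp (Csub (u n) (mkC a b))). destruct (u n); simpl in *.
  unfold Rminus in *. lra.
Qed.

Lemma Csum_ext (a b : nat -> Cplx) (n : nat) : (forall k, a k = b k) -> Csum a n = Csum b n.
Proof. intro H; induction n; simpl; rewrite ?IHn, ?H; auto. Qed.

Lemma Cser_ext (a b : nat -> Cplx) (l : Cplx) : (forall k, a k = b k) -> Cser a l -> Cser b l.
Proof. intros H H1. apply (Ccv_ext (Csum a)); auto. intros; apply Csum_ext; auto. Qed.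

Lemma Cser_unique (a : nat -> Cplx) (l1 l2 : Cplx) : Cser a l1 -> Cser a l2 -> l1 = l2.
Proof. apply Ccv_unique. Qed.

Lemma Csum_add (a b : nat -> Cplx) (n : nat) :
  Csum (fun k => Cadd (a k) (b k)) n = Cadd (Csum a n) (Csum b n).
Proof. induction n; simpl; [|rewrite IHn]; ring. Qed.

Lemma Csum_sub (a b : nat -> Cplx) (n : nat) :
  Csum (fun k => Csub (a k) (b k)) n = Csub (Csum a n) (Csum b n).
Proof. induction n; simpl; [|rewrite IHn]; ring. Qed.

Lemma Csum_scal (a : nat -> Cplx) (c : Cplx) (n : nat) :
  Csum (fun k => Cmul c (a k)) n = Cmul c (Csum a n).
Proof. induction n; simpl; [|rewrite IHn]; ring. Qed.

Lemma Csum_const (c : Cplx) (N : nat) : Csum (fun _ => c) N = Cmul (RtoC (INR (S N))) c.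
Proof.
  induction N; simpl Csum; [simpl; apply Cplx_ext; simpl; ring|].
  rewrite IHN, (S_INR (S N)), RtoC_plus. change (RtoC 1) with Cone. ring.
Qed.

Lemma Csum_shift (a : nat -> Cplx) (n : nat) :
  Csum (fun k => a (S k)) n = Csub (Csum a (S n)) (a 0%nat).
Proof. induction n; simpl; [|rewrite IHn; simpl]; ring. Qed.

Lemma Cser_add (a b : nat -> Cplx) (la lb : Cplx) :
  Cser a la -> Cser b lb -> Cser (fun k => Cadd (a k) (b k)) (Cadd la lb).
Proof.
  intros. apply (Ccv_ext (fun n => Cadd (Csum a n) (Csum b n))).
  - intros; rewrite Csum_add; auto.
  - apply Ccv_add; auto.
Qed.

Lemma Cser_scal (a : nat -> Cplx) (la c : Cplx) : Cser a la -> Cser (fun k => Cmul c (a k)) (Cmul c la).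
Proof.
  intros. apply (Ccv_ext (fun n => Cmul c (Csum a n))).
  - intros; rewrite Csum_scal; auto.
  - apply Ccv_scal; auto.
Qed.

Lemma Cser_shift (a : nat -> Cplx) (l : Cplx) : Cser a l -> Cser (fun k => a (S k)) (Csub l (a 0%nat)).
Proof.
  intros. apply (Ccv_ext (fun n => Csub (Csum a (S n)) (a 0%nat))).
  - intros; rewrite Csum_shift; auto.
  - apply (Ccv_sub (fun n => Csum a (S n)) (fun _ => a 0%nat)); [apply Ccv_shift; auto | apply Ccv_const].
Qed.

Definition prep (c : Cplx) (s : nat -> Cplx) (n : nat) : Cplx :=
  match n with O => c | S m => s m end.

Lemma Cser_prep (c : Cplx) (s : nat -> Cplx) (l : Cplx) : Cser s l -> Cser (prep c s) (Cadd c l).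
Proof.
  intros H. apply Ccv_unshift.
  apply (Ccv_ext (fun n => Cadd c (Csum s n))).
  - intro n. rewrite (Csum_shift (prep c s)). simpl. ring.
  - apply (Ccv_add (fun _ => c)); [apply Ccv_const | exact H].
Qed.

Lemma Cser_zero : Cser (fun _ => Czero) Czero.
Proof.
  apply (Ccv_ext (fun _ => Czero)); [|apply Ccv_const].
  intro n; induction n; simpl; auto. rewrite <- IHn. ring.
Qed.

Lemma Cser_delta : Cser (prep Cone (fun _ => Czero)) Cone.
Proof. replace Cone with (Cadd Cone Czero) at 2 by ring. apply Cser_prep, Cser_zero. Qed.

Lemma Ccv_Csum (f : nat -> nat -> Cplx) (g : nat -> Cplx) (K : nat) :
  (forall k, Ccv (fun N => f N k) (g k)) -> Ccv (fun N => Csum (f N) K) (Csum g K).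
Proof.
  intro H; induction K; simpl; auto.
  apply (Ccv_add (fun N => Csum (f N) K) (fun N => f N (S K))); auto.
Qed.

Section GeometricDomination.
Variables (a : nat -> Cplx) (M th : R).
Hypothesis Hth : 0 <= th < 1.
Hypothesis Ha : forall k, Cnorm (a k) <= M * th ^ k.

Lemma dom_const_nonneg : 0 <= M.
Proof. specialize (Ha 0%nat). simpl in Ha. pose proof (Cnorm_ge0 (a 0%nat)). lra. Qed.

Lemma psum_diff (K d : nat) :
  Cnorm (Csub (Csum a (K + d)) (Csum a K)) <= M * th ^ (S K) * (1 - th ^ d) / (1 - th).
Proof.
  induction d.
  - rewrite Nat.add_0_r. replace (Csub (Csum a K) (Csum a K)) with Czero by ring.
    rewrite Cnorm_zero. simpl. right. field. lra.
  - rewrite Nat.add_succ_r. simpl Csum.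
    replace (Csub (Cadd (Csum a (K + d)) (a (S (K + d)))) (Csum a K))
      with (Cadd (Csub (Csum a (K + d)) (Csum a K)) (a (S (K + d)))) by ring.
    eapply Rle_trans; [apply Cnorm_triangle|]. pose proof (Ha (S (K + d))) as HaK.
    replace (th ^ S (K + d)) with (th ^ S K * th ^ d) in HaK by (rewrite <- pow_add; f_equal; lia).
    apply Rle_trans with (M * th ^ S K * (1 - th ^ d) / (1 - th) + M * (th ^ S K * th ^ d)); [lra|].
    right. simpl. field. lra.
Qed.

Lemma psum_tail (K n : nat) : (n >= K)%nat ->
  Cnorm (Csub (Csum a n) (Csum a K)) <= M * th ^ (S K) / (1 - th).
Proof.
  intros Hn. replace n with (K + (n - K))%nat by lia. eapply Rle_trans; [apply psum_diff|].
  pose proof dom_const_nonneg. assert (0 <= th ^ (n - K)) by (apply pow_le; lra).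
  assert (0 <= th ^ S K) by (apply pow_le; lra).
  assert (0 < / (1 - th)) by (apply Rinv_0_lt_compat; lra).
  assert (0 <= M * th ^ S K) by (apply Rmult_le_pos; lra).
  assert (0 <= M * th ^ S K * th ^ (n - K) * / (1 - th)) by
    (apply Rmult_le_pos; [apply Rmult_le_pos|]; lra).
  unfold Rdiv. nra.
Qed.

End GeometricDomination.

Lemma small_geo (M th e : R) : 0 <= th < 1 -> e > 0 -> exists K, M * th ^ (S K) / (1 - th) < e.
Proof.
  intros Hth He.
  destruct (Rpow_cv0 th Hth (e * (1 - th) / (Rabs M + 1))) as [K HK].
  { apply Rdiv_lt_0_compat; [nra|]. pose proof (Rabs_pos M); lra. }
  exists K. specialize (HK (S K) ltac:(lia)). pose proof (Rle_abs M). pose proof (Rabs_pos M).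
  assert (0 <= th ^ S K) by (apply pow_le; lra).
  apply (Rmult_lt_reg_r (1 - th)); [lra|]. unfold Rdiv. rewrite Rmult_assoc, Rinv_l, Rmult_1_r by lra.
  apply Rle_lt_trans with ((Rabs M + 1) * th ^ S K); [nra|].
  apply (Rmult_lt_reg_r (/ (Rabs M + 1))); [apply Rinv_0_lt_compat; lra|].
  replace ((Rabs M + 1) * th ^ S K * / (Rabs M + 1)) with (th ^ S K) by (field; lra). lra.
Qed.

Lemma Cser_gdom (a : nat -> Cplx) (M th : R) :
  0 <= th < 1 -> (forall k, Cnorm (a k) <= M * th ^ k) -> { l | Cser a l }.
Proof.
  intros Hth Ha. apply C_complete. intros e He.
  destruct (small_geo M th (e / 2) Hth ltac:(lra)) as [K HK]. exists K. intros n m Hn Hm.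
  pose proof (psum_tail a M th Hth Ha K n Hn). pose proof (psum_tail a M th Hth Ha K m Hm).
  pose proof (Cnorm_sub_tri (Csum a n) (Csum a K) (Csum a m)) as T.
  rewrite (Cnorm_sub (Csum a K)) in T. lra.
Qed.

Lemma Cser_tail (a : nat -> Cplx) (l : Cplx) (M th : R) (K : nat) :
  0 <= th < 1 -> (forall k, Cnorm (a k) <= M * th ^ k) -> Cser a l ->
  Cnorm (Csub l (Csum a K)) <= M * th ^ (S K) / (1 - th).
Proof. intros. apply (Ccv_norm_le (Csum a) l (Csum a K) _ K); auto. intros; apply psum_tail; auto. Qed.

(* Dominated convergence (Tannery's theorem) for a geometric dominating sequence. *)
Lemma Cser_dominated (f : nat -> nat -> Cplx) (g : nat -> Cplx) (L : nat -> Cplx) (Lg : Cplx) (M th : R) :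
  0 <= th < 1 -> (forall N k, Cnorm (f N k) <= M * th ^ k) ->
  (forall k, Ccv (fun N => f N k) (g k)) -> (forall N, Cser (f N) (L N)) -> Cser g Lg -> Ccv L Lg.
Proof.
  intros Hth Hd Hp HL Hg e He.
  assert (Hgd : forall k, Cnorm (g k) <= M * th ^ k).
  { intro k. replace (g k) with (Csub (g k) Czero) by ring.
    apply (Ccv_norm_le (fun N => f N k) _ _ _ 0%nat (Hp k)).
    intros. replace (Csub (f n k) Czero) with (f n k) by ring. auto. }
  destruct (small_geo M th (e / 3) Hth ltac:(lra)) as [K HK].
  destruct (Ccv_Csum f g K Hp (e / 3) ltac:(lra)) as [N HN]. exists N. intros n Hn.
  pose proof (Cser_tail (f n) (L n) M th K Hth (Hd n) (HL n)) as T1.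
  pose proof (Cser_tail g Lg M th K Hth Hgd Hg) as T2. specialize (HN n Hn).
  pose proof (Cnorm_sub_tri (L n) (Csum (f n) K) Lg) as T3.
  pose proof (Cnorm_sub_tri (Csum (f n) K) (Csum g K) Lg) as T4.
  rewrite (Cnorm_sub (Csum g K)) in T4. lra.
Qed.

Definition csum (f : nat -> Cplx) : Cplx := epsilon (inhabits Czero) (fun l => Cser f l).

Lemma csum_spec (f : nat -> Cplx) : (exists l, Cser f l) -> Cser f (csum f).
Proof. apply (epsilon_spec (inhabits Czero) (fun l => Cser f l)). Qed.

Lemma csum_gdom (f : nat -> Cplx) (M th : R) :
  0 <= th < 1 -> (forall k, Cnorm (f k) <= M * th ^ k) -> Cser f (csum f).
Proof. intros. apply csum_spec. destruct (Cser_gdom f M th) as [l Hl]; eauto. Qed.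

Lemma csum_eq (f : nat -> Cplx) (l : Cplx) : Cser f l -> csum f = l.
Proof. intros. eapply Cser_unique; [apply csum_spec|]; eauto. Qed.

Fixpoint Rprod (f : nat -> R) (n : nat) : R := match n with O => 1 | S k => Rprod f k * f k end.
Fixpoint Rsum (f : nat -> R) (n : nat) : R := match n with O => 0 | S k => Rsum f k + f k end.

Lemma Rprod_split (f : nat -> R) (K m : nat) :
  Rprod f (K + m) = Rprod f K * Rprod (fun i => f (K + i)%nat) m.
Proof. induction m; simpl; [rewrite Nat.add_0_r; ring|]. rewrite Nat.add_succ_r; simpl. rewrite IHm; ring. Qed.

Lemma Rprod_pos (f : nat -> R) (n : nat) : (forall j, 0 < f j) -> 0 < Rprod f n.
Proof. intro H; induction n; simpl; [lra | apply Rmult_lt_0_compat; auto]. Qed.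

Lemma Rprod_nonneg (f : nat -> R) (n : nat) : (forall j, 0 <= f j) -> 0 <= Rprod f n.
Proof. intro H; induction n; simpl; [lra | apply Rmult_le_pos; auto]. Qed.

Lemma Rprod_decr (f : nat -> R) (n m : nat) : (forall j, 0 <= f j <= 1) -> (n <= m)%nat -> Rprod f m <= Rprod f n.
Proof.
  intros H Hnm. induction Hnm; simpl; [lra|]. pose proof (H m).
  pose proof (Rprod_nonneg f m ltac:(intro j; specialize (H j); lra)). nra.
Qed.

Lemma Rsum_nonneg (f : nat -> R) (n : nat) : (forall k, 0 <= f k) -> 0 <= Rsum f n.
Proof. intro H; induction n; simpl; [lra|]. specialize (H n); lra. Qed.

Lemma Rsum_ge_term (f : nat -> R) (n k : nat) : (forall k, 0 <= f k) -> (k < n)%nat -> f k <= Rsum f n.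
Proof.
  intros H Hk. induction Hk; simpl; [pose proof (Rsum_nonneg f k H); lra|]. specialize (H m). lra.
Qed.

Lemma weierstrass (a : nat -> R) (n : nat) : (forall j, 0 <= a j <= 1) -> 1 - Rsum a n <= Rprod (fun j => 1 - a j) n.
Proof.
  intro H; induction n; simpl; [lra|]. specialize (H n) as Hn.
  pose proof (Rprod_nonneg (fun j => 1 - a j) n ltac:(intro j; specialize (H j); lra)).
  pose proof (Rsum_nonneg a n ltac:(intro j; specialize (H j); lra)). nra.
Qed.

Lemma Rsum_geo (s r : R) (K m : nat) : r <> 1 ->
  Rsum (fun i => s * r ^ (K + i)) m = s * r ^ K * (1 - r ^ m) / (1 - r).
Proof. intro Hr. induction m; simpl; [field; lra|]. rewrite IHm, pow_add. field. lra. Qed.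

Lemma prod_lower (s r : R) : 0 <= s < 1 -> 0 <= r < 1 ->
  exists c, 0 < c /\ forall n, c <= Rprod (fun j => 1 - s * r ^ j) n.
Proof.
  intros Hs Hr.
  assert (Hf1 : forall j, 0 < 1 - s * r ^ j <= 1).
  { intro j. pose proof (pow_le1 r j ltac:(lra)). assert (0 <= r ^ j) by (apply pow_le; lra). nra. }
  destruct (small_geo s r (1 / 2) Hr ltac:(lra)) as [K HK].
  set (P := Rprod (fun j => 1 - s * r ^ j) (S K)).
  assert (HP : 0 < P) by (apply Rprod_pos; intro j; apply (Hf1 j)).
  exists (P / 2). split; [lra|]. intro n.
  destruct (le_lt_dec n (S K)) as [Hn|Hn].
  - pose proof (Rprod_decr (fun j => 1 - s * r ^ j) n (S K) ltac:(intro j; specialize (Hf1 j); split; lra) Hn). fold P in H. lra.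
  - replace n with (S K + (n - S K))%nat by lia. rewrite Rprod_split. fold P.
    assert (1 / 2 <= Rprod (fun i => 1 - s * r ^ (S K + i)) (n - S K)).
    { eapply Rle_trans; [|apply (weierstrass (fun i => s * r ^ (S K + i)))].
      - rewrite Rsum_geo by lra. assert (0 <= r ^ (n - S K)) by (apply pow_le; lra).
        assert (0 <= s * r ^ S K) by (apply Rmult_le_pos; [lra|apply pow_le; lra]).
        assert (s * r ^ S K * (1 - r ^ (n - S K)) / (1 - r) <= s * r ^ S K / (1 - r)).
        { unfold Rdiv. apply Rmult_le_compat_r; [apply Rlt_le, Rinv_0_lt_compat; lra | nra]. }
        lra.
      - intro j. specialize (Hf1 (S K + j)%nat). assert (0 <= r ^ (S K + j)) by (apply pow_le; lra). nra. }
    nra.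
Qed.

Lemma ratio_geo (a : nat -> R) (th : R) (K : nat) : 0 < th -> (forall k, 0 <= a k) ->
  (forall k, (k >= K)%nat -> a (S k) <= th * a k) -> exists M, forall k, a k <= M * th ^ k.
Proof.
  intros Hth Ha Hr. set (M := Rsum (fun k => a k / th ^ k) (S K)). exists M.
  assert (Hnn : forall k, 0 <= a k / th ^ k).
  { intro k. apply Rmult_le_pos; auto. apply Rlt_le, Rinv_0_lt_compat, pow_lt; auto. }
  assert (Hk : forall k, (k <= K)%nat -> a k <= M * th ^ k).
  { intros k Hk. pose proof (Rsum_ge_term (fun k => a k / th ^ k) (S K) k Hnn ltac:(lia)) as Hs.
    fold M in Hs. pose proof (pow_lt th k Hth).
    replace (a k) with (a k / th ^ k * th ^ k) by (field; lra). apply Rmult_le_compat_r; lra. }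
  intro k. destruct (le_lt_dec k K) as [HkK|HkK]; auto.
  induction k; [lia|]. specialize (Hr k ltac:(lia)).
  assert (a k <= M * th ^ k) by (destruct (Nat.eq_dec k K); [subst; apply Hk; lia | apply IHk; lia]).
  simpl. nra.
Qed.

Lemma qpoch_low (a p : Cplx) (n : nat) : (forall j, 0 <= 1 - Cnorm a * Cnorm p ^ j) ->
  Rprod (fun j => 1 - Cnorm a * Cnorm p ^ j) n <= Cnorm (qpoch a p n).
Proof.
  intro H. induction n; simpl; [rewrite Cnorm_one; lra|].
  rewrite Cnorm_mul. pose proof (Cnorm_rev Cone (Copp (Cmul a (Cpow p n)))) as T.
  rewrite Cnorm_opp, Cnorm_one, Cnorm_mul, Cnorm_pow in T. unfold Csub.
  pose proof (Rprod_nonneg (fun j => 1 - Cnorm a * Cnorm p ^ j) n H). specialize (H n).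
  apply Rmult_le_compat; auto.
Qed.

Lemma qpoch_up (a p : Cplx) (n : nat) : (forall j, 0 <= 1 - Cnorm a * Cnorm p ^ j) ->
  Cnorm (qpoch a p n) * Rprod (fun j => 1 - Cnorm a * Cnorm p ^ j) n <= 1.
Proof.
  intro H. induction n; simpl; [rewrite Cnorm_one; lra|].
  rewrite Cnorm_mul. pose proof (Cnorm_triangle Cone (Copp (Cmul a (Cpow p n)))) as T.
  rewrite Cnorm_opp, Cnorm_one, Cnorm_mul, Cnorm_pow in T.
  fold (Csub Cone (Cmul a (Cpow p n))) in T. pose proof (H n).
  set (x := Cnorm a * Cnorm p ^ n) in *. set (P := Rprod (fun j => 1 - Cnorm a * Cnorm p ^ j) n) in *.
  set (Q := Cnorm (qpoch a p n)) in *. set (y := Cnorm (Csub Cone (Cmul a (Cpow p n)))) in *.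
  assert (0 <= Q) by apply Cnorm_ge0. assert (0 <= y) by apply Cnorm_ge0.
  assert (0 <= P) by (apply Rprod_nonneg; intro j; apply H).
  assert (0 <= x) by (apply Rmult_le_pos; [apply Cnorm_ge0 | apply pow_le, Cnorm_ge0]).
  assert (Q * y * (P * (1 - x)) <= Q * P * ((1 + x) * (1 - x))).
  { replace (Q * y * (P * (1 - x))) with (Q * P * (y * (1 - x))) by ring.
    apply Rmult_le_compat_l; [apply Rmult_le_pos; auto | apply Rmult_le_compat_r; lra]. }
  assert (0 <= Q * P) by (apply Rmult_le_pos; auto). nra.
Qed.

Lemma one_sub_pow_nonneg (a p : Cplx) (j : nat) : Cnorm a < 1 -> Cnorm p < 1 ->
  0 <= 1 - Cnorm a * Cnorm p ^ j.
Proof.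
  intros Ha Hp. pose proof (Cnorm_pow_le1 p j Hp) as T. rewrite Cnorm_pow in T.
  pose proof (Cnorm_ge0 a). assert (0 <= Cnorm p ^ j) by (apply pow_le, Cnorm_ge0). nra.
Qed.

Lemma qpoch_lower_unif (s r : R) : 0 <= s < 1 -> 0 <= r < 1 -> exists c, 0 < c /\
  forall a p n, Cnorm a <= s -> Cnorm p <= r -> c <= Cnorm (qpoch a p n).
Proof.
  intros Hs Hr. destruct (prod_lower s r Hs Hr) as [c [Hc H]]. exists c. split; auto.
  intros a p n Ha Hp. eapply Rle_trans; [apply (H n)|].
  assert (Hj : forall j, 0 <= Cnorm a * Cnorm p ^ j <= s * r ^ j).
  { intro j. pose proof (Cnorm_ge0 a). pose proof (Cnorm_ge0 p).
    assert (0 <= Cnorm p ^ j) by (apply pow_le; lra).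
    split; [nra|]. apply Rmult_le_compat; auto. apply pow_incr; lra. }
  eapply Rle_trans; [|apply qpoch_low; intro j; apply one_sub_pow_nonneg; lra].
  clear H. induction n; simpl; [lra|].
  pose proof (Hj n). pose proof (pow_le1 r n ltac:(lra)).
  apply Rmult_le_compat; auto; [|nra|lra].
  apply Rprod_nonneg. intro j. specialize (Hj j). pose proof (pow_le1 r j ltac:(lra)). nra.
Qed.

Lemma qpoch_neq0 (a p : Cplx) (n : nat) : Cnorm a < 1 -> Cnorm p < 1 -> qpoch a p n <> Czero.
Proof.
  intros Ha Hp E. pose proof (Cnorm_ge0 a). pose proof (Cnorm_ge0 p).
  destruct (qpoch_lower_unif (Cnorm a) (Cnorm p)) as [c [Hc Hl]]; [lra|lra|].
  specialize (Hl a p n (Rle_refl _) (Rle_refl _)). rewrite E, Cnorm_zero in Hl. lra.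
Qed.

Lemma qpoch_bounded (a p : Cplx) : Cnorm a < 1 -> Cnorm p < 1 -> exists B, forall n, Cnorm (qpoch a p n) <= B.
Proof.
  intros Ha Hp. pose proof (Cnorm_ge0 a). pose proof (Cnorm_ge0 p).
  destruct (prod_lower (Cnorm a) (Cnorm p)) as [c [Hc Hl]]; [lra|lra|].
  exists (/ c). intro n.
  pose proof (qpoch_up a p n ltac:(intro j; apply one_sub_pow_nonneg; auto)).
  specialize (Hl n). pose proof (Cnorm_ge0 (qpoch a p n)).
  apply (Rmult_le_reg_r c); auto. rewrite Rinv_l by lra. nra.
Qed.

(* tri k = k (k - 1) / 2 *)
Fixpoint tri (n : nat) : nat := match n with O => O | S k => (tri k + k)%nat end.

Lemma tri_double (n : nat) : (tri n + tri n + n = n * n)%nat.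
Proof. induction n; simpl; lia. Qed.

Definition theta_term (p z : Cplx) (k : nat) : Cplx := Cmul (Cpow (Copp z) k) (Cpow p (tri k)).

Definition pos_term (p b z : Cplx) (k : nat) : Cplx := Cdiv (theta_term p z k) (qpoch b p k).

Lemma pos_term_index0 (p b z : Cplx) : pos_term p b z 0 = Cone.
Proof. unfold pos_term, theta_term, Cdiv. simpl. rewrite Cinv_one. ring. Qed.

Fixpoint rev_poch (p b : Cplx) (n : nat) : Cplx :=
  match n with O => Cone | S k => Cmul (rev_poch p b k) (Csub (Cpow p (S k)) b) end.

(* the term of index n = -(m+1) of the same bilateral series *)
Definition neg_term (p b z : Cplx) (m : nat) : Cplx :=
  Cmul (Cpow (Copp (Cinv z)) (S m)) (rev_poch p b (S m)).

Lemma tri_dom (R r : R) : 0 <= R -> 0 <= r < 1 -> exists M, forall k, R ^ k * r ^ tri k <= M * (/ 2) ^ k.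
Proof.
  intros HR Hr.
  destruct (Rpow_cv0 r Hr (/ (2 * (R + 1)))) as [K HK]; [apply Rinv_0_lt_compat; lra|].
  apply (ratio_geo (fun k => R ^ k * r ^ tri k) (/ 2) K); [lra| |].
  - intro k. apply Rmult_le_pos; apply pow_le; lra.
  - intros k Hk. simpl. rewrite pow_add. specialize (HK k Hk).
    assert (0 <= R ^ k) by (apply pow_le; lra). assert (0 <= r ^ tri k) by (apply pow_le; lra).
    assert (0 <= r ^ k) by (apply pow_le; lra).
    assert (R * r ^ k <= / 2).
    { apply Rle_trans with ((R + 1) * / (2 * (R + 1))); [nra|]. right. field. lra. }
    replace (R * R ^ k * (r ^ tri k * r ^ k)) with ((R * r ^ k) * (R ^ k * r ^ tri k)) by ring.
    apply Rmult_le_compat_r; [apply Rmult_le_pos|]; auto.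
Qed.

Lemma pos_term_dom (p : Cplx) (bb R : R) : Cnorm p < 1 -> 0 <= bb < 1 -> 0 <= R ->
  exists M, forall b z k, Cnorm b <= bb -> Cnorm z <= R -> Cnorm (pos_term p b z k) <= M * (/ 2) ^ k.
Proof.
  intros Hp Hbb HR. pose proof (Cnorm_ge0 p).
  destruct (qpoch_lower_unif bb (Cnorm p)) as [c [Hc Hl]]; [lra|lra|].
  destruct (tri_dom R (Cnorm p) HR ltac:(lra)) as [M HM]. exists (M / c). intros b z k Hb Hz.
  specialize (Hl b p k Hb (Rle_refl _)). specialize (HM k).
  assert (qpoch b p k <> Czero) by (intro E; rewrite E, Cnorm_zero in Hl; lra).
  unfold pos_term, theta_term, Cdiv. rewrite Cnorm_mul, Cnorm_inv, Cnorm_mul, !Cnorm_pow, Cnorm_opp by auto.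
  assert (Cnorm z ^ k <= R ^ k) by (apply pow_incr; split; [apply Cnorm_ge0 | auto]).
  assert (0 <= Cnorm p ^ tri k) by (apply pow_le; lra).
  assert (0 <= Cnorm z ^ k) by (apply pow_le, Cnorm_ge0).
  assert (Cnorm z ^ k * Cnorm p ^ tri k <= M * (/ 2) ^ k) by nra.
  apply Rle_trans with (M * (/ 2) ^ k * / Cnorm (qpoch b p k)).
  - apply Rmult_le_compat_r; [apply Rlt_le, Rinv_0_lt_compat; lra | auto].
  - replace (M / c * (/ 2) ^ k) with (M * (/ 2) ^ k * / c) by (unfold Rdiv; ring).
    apply Rmult_le_compat_l; [nra|]. apply Rinv_le_contravar; auto.
Qed.

Lemma pos_term_ser (p b z : Cplx) : Cnorm p < 1 -> Cnorm b < 1 -> Cser (pos_term p b z) (csum (pos_term p b z)).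
Proof.
  intros Hp Hb. pose proof (Cnorm_ge0 b).
  destruct (pos_term_dom p (Cnorm b) (Cnorm z) Hp ltac:(lra) (Cnorm_ge0 z)) as [M HM].
  apply (csum_gdom _ M (/ 2)); [lra|]. intro k. apply HM; lra.
Qed.

(* Euler's series for the infinite product (x;p)_oo: sum_k (-x)^k p^(k(k-1)/2) / (p;p)_k. *)
Definition qinf (p x : Cplx) : Cplx := csum (pos_term p p x).

(* Termwise form of (x;p)_oo = (1 - x) (px;p)_oo. *)
Lemma euler_term_step (p x : Cplx) (k : nat) : Cnorm p < 1 ->
  pos_term p p x (S k) = Csub (pos_term p p (Cmul p x) (S k)) (Cmul x (pos_term p p (Cmul p x) k)).
Proof.
  intros Hp. unfold pos_term, theta_term. simpl qpoch. simpl tri. rewrite Cpow_add.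
  replace (Copp (Cmul p x)) with (Cmul p (Copp x)) by ring. rewrite !Cpow_mul.
  pose proof (qpoch_neq0 p p k Hp Hp).
  assert (Csub Cone (Cmul p (Cpow p k)) <> Czero).
  { apply one_sub_neq0. rewrite Cnorm_mul. pose proof (Cnorm_pow_le1 p k Hp).
    pose proof (Cnorm_ge0 p). pose proof (Cnorm_ge0 (Cpow p k)). nra. }
  simpl Cpow. field. split; auto.
Qed.

Lemma qinf_step (p x : Cplx) : Cnorm p < 1 -> qinf p x = Cmul (Csub Cone x) (qinf p (Cmul p x)).
Proof.
  intros Hp. pose proof (pos_term_ser p p (Cmul p x) Hp Hp) as H1.
  apply (Cser_unique (pos_term p p x)); [apply pos_term_ser; auto|].
  replace (Cmul (Csub Cone x) (qinf p (Cmul p x)))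
    with (Cadd (qinf p (Cmul p x)) (Cmul (Copp x) (Cadd Czero (qinf p (Cmul p x))))) by ring.
  eapply Cser_ext; [|exact (Cser_add _ _ _ _ H1 (Cser_scal _ _ (Copp x) (Cser_prep Czero _ _ H1)))].
  intros [|k]; simpl prep.
  - unfold pos_term, theta_term. simpl. ring.
  - rewrite (euler_term_step p x k) by auto. ring.
Qed.

Lemma qinf_iter (p x : Cplx) (N : nat) : Cnorm p < 1 ->
  qinf p x = Cmul (qpoch x p N) (qinf p (Cmul (Cpow p N) x)).
Proof.
  intros Hp. induction N; simpl; [replace (Cmul Cone x) with x by ring; ring|].
  rewrite IHN, (qinf_step p (Cmul (Cpow p N) x)) by auto.
  replace (Cmul p (Cmul (Cpow p N) x)) with (Cmul (Cmul p (Cpow p N)) x) by ring. ring.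
Qed.

(* (p^N x;p)_oo -> 1, by dominated convergence in Euler's series. *)
Lemma qinf_tail (p x : Cplx) : Cnorm p < 1 -> Ccv (fun N => qinf p (Cmul (Cpow p N) x)) Cone.
Proof.
  intros Hp. pose proof (Cnorm_ge0 p).
  destruct (pos_term_dom p (Cnorm p) (Cnorm x) Hp ltac:(lra) (Cnorm_ge0 x)) as [M HM].
  apply (Cser_dominated (fun N k => pos_term p p (Cmul (Cpow p N) x) k) (prep Cone (fun _ => Czero))
    _ _ M (/ 2)); [lra| | | |apply Cser_delta].
  - intros N k. apply HM; [lra|]. apply Cnorm_mul_pow_le; auto.
  - intros k. unfold pos_term, theta_term, Cdiv.
    apply (Ccv_ext (fun N => Cmul (Cpow (Copp (Cmul (Cpow p N) x)) k)
                                  (Cmul (Cpow p (tri k)) (Cinv (qpoch p p k))))); [intros; ring|].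
    eapply Ccv_eq.
    + apply (Ccv_mul _ (fun _ => _)); [|apply Ccv_const].
      apply Ccv_pow, (Ccv_ext (fun N => Cmul (Cpow p N) (Copp x))); [intros; ring|].
      apply Ccv_geometric; auto.
    + destruct k; simpl; [rewrite Cinv_one|]; ring.
  - intros N. apply pos_term_ser; auto.
Qed.

Lemma qinf_spec (p x : Cplx) : Cnorm p < 1 -> qpinf x p (qinf p x).
Proof.
  intros Hp. pose proof (qinf_tail p x Hp) as H. destruct (H (1 / 2) ltac:(lra)) as [K HK].
  apply (Ccv_ext_ev (fun N => Cmul (qinf p x) (Cinv (qinf p (Cmul (Cpow p N) x)))) _ _ K).
  - intros n Hn. specialize (HK n Hn).
    assert (qinf p (Cmul (Cpow p n) x) <> Czero).
    { intro E. rewrite E in HK. replace (Csub Czero Cone) with (Copp Cone) in HK by ring.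
      rewrite Cnorm_opp, Cnorm_one in HK. lra. }
    rewrite (qinf_iter p x n Hp) at 1. field. auto.
  - pose proof (Ccv_scal _ _ (qinf p x) (Ccv_inv _ _ H Cone_neq_Czero)) as H2.
    rewrite Cinv_one in H2. replace (Cmul (qinf p x) Cone) with (qinf p x) in H2 by ring. exact H2.
Qed.

Lemma qinf_neq0 (p x : Cplx) : Cnorm p < 1 -> Cnorm x < 1 -> qinf p x <> Czero.
Proof.
  intros Hp Hx E. pose proof (Cnorm_ge0 x). pose proof (Cnorm_ge0 p).
  destruct (qpoch_lower_unif (Cnorm x) (Cnorm p)) as [c [Hc Hl]]; [lra|lra|].
  pose proof (Ccv_norm_ge _ _ c (qinf_spec p x Hp) (fun n => Hl x p n (Rle_refl _) (Rle_refl _))) as T.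
  rewrite E, Cnorm_zero in T. lra.
Qed.

Lemma qpoch_shift (b p : Cplx) (k : nat) : qpoch b p (S k) = Cmul (Csub Cone b) (qpoch (Cmul b p) p k).
Proof.
  induction k; [simpl; ring|].
  change (qpoch b p (S (S k))) with (Cmul (qpoch b p (S k)) (Csub Cone (Cmul b (Cpow p (S k))))).
  rewrite IHk. simpl. ring.
Qed.

Lemma rev_poch_shift (p b : Cplx) (n : nat) :
  rev_poch p (Cmul b p) (S n) = Cmul (Cpow p (S n)) (Cmul (Csub Cone b) (rev_poch p b n)).
Proof.
  induction n; [simpl; ring|].
  change (rev_poch p (Cmul b p) (S (S n)))
    with (Cmul (rev_poch p (Cmul b p) (S n)) (Csub (Cpow p (S (S n))) (Cmul b p))).
  rewrite IHn. simpl. ring.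
Qed.

Lemma theta_term_S (p z : Cplx) (k : nat) :
  theta_term p z (S k) = Cmul (Copp z) (Cmul (Cpow p k) (theta_term p z k)).
Proof. unfold theta_term. simpl tri. rewrite Cpow_add. simpl. ring. Qed.

Lemma pos_term_contiguous (p b z : Cplx) (k : nat) :
  z <> Czero -> qpoch b p (S k) <> Czero -> Csub Cone b <> Czero ->
  pos_term p b z k = Cadd (Cdiv (pos_term p (Cmul b p) z k) (Csub Cone b)) (Cmul (Cdiv b z) (pos_term p b z (S k))).
Proof.
  intros Hz Hq Hb. unfold pos_term. rewrite theta_term_S.
  assert (Hq3 : qpoch b p k <> Czero) by (intro E; apply Hq; simpl; rewrite E; ring).
  assert (Hq4 : Csub Cone (Cmul b (Cpow p k)) <> Czero) by (intro E; apply Hq; simpl; rewrite E; ring).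
  pose proof (qpoch_shift b p k) as Hs. simpl in Hs.
  assert (E1 : qpoch (Cmul b p) p k = Cdiv (Cmul (qpoch b p k) (Csub Cone (Cmul b (Cpow p k)))) (Csub Cone b)).
  { rewrite Hs. field. auto. }
  rewrite E1. simpl qpoch. field. repeat split; auto.
Qed.

Lemma neg_term_contiguous0 (p b z : Cplx) : z <> Czero -> Csub Cone b <> Czero ->
  neg_term p b z 0 = Cadd (Cdiv (neg_term p (Cmul b p) z 0) (Csub Cone b)) (Cdiv b z).
Proof. intros Hz Hb. unfold neg_term. simpl. unfold Cdiv. field. auto.
Qed.

Lemma neg_term_contiguousS (p b z : Cplx) (m : nat) : z <> Czero -> Csub Cone b <> Czero ->
  neg_term p b z (S m) = Cadd (Cdiv (neg_term p (Cmul b p) z (S m)) (Csub Cone b)) (Cmul (Cdiv b z) (neg_term p b z m)).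
Proof.
  intros Hz Hb. unfold neg_term. rewrite (rev_poch_shift p b (S m)).
  change (rev_poch p b (S (S m))) with (Cmul (rev_poch p b (S m)) (Csub (Cpow p (S (S m))) b)).
  change (Cpow (Copp (Cinv z)) (S (S m))) with (Cmul (Copp (Cinv z)) (Cpow (Copp (Cinv z)) (S m))).
  unfold Cdiv. field. auto.
Qed.

Lemma bilateral_contiguous (p b z A B A' B' : Cplx) :
  z <> Czero -> Csub Cone b <> Czero -> (forall k, qpoch b p k <> Czero) ->
  Cser (pos_term p b z) A -> Cser (neg_term p b z) B ->
  Cser (pos_term p (Cmul b p) z) A' -> Cser (neg_term p (Cmul b p) z) B' ->
  Cmul (Cadd A B) (Cmul (Csub Cone b) (Csub Cone (Cdiv b z))) = Cadd A' B'.
Proof.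
  intros Hz Hb Hq HA HB HA' HB'.
  pose proof (Cser_shift _ _ HA) as HA1. rewrite pos_term_index0 in HA1.
  assert (EA : A = Cadd (Cmul (Cinv (Csub Cone b)) A') (Cmul (Cdiv b z) (Csub A Cone))).
  { apply (Cser_unique (pos_term p b z)); auto.
    eapply Cser_ext; [|exact (Cser_add _ _ _ _ (Cser_scal _ _ (Cinv (Csub Cone b)) HA')
                                              (Cser_scal _ _ (Cdiv b z) HA1))].
    intro k. cbv beta. rewrite (pos_term_contiguous p b z k); auto. unfold Cdiv. ring. }
  assert (EB : B = Cadd (Cmul (Cinv (Csub Cone b)) B') (Cmul (Cdiv b z) (Cadd Cone B))).
  { apply (Cser_unique (neg_term p b z)); auto.
    eapply Cser_ext; [|exact (Cser_add _ _ _ _ (Cser_scal _ _ (Cinv (Csub Cone b)) HB')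
                                              (Cser_scal _ _ (Cdiv b z) (Cser_prep Cone _ _ HB)))].
    intros [|m]; cbv beta; simpl prep.
    - rewrite (neg_term_contiguous0 p b z); auto. unfold Cdiv. ring.
    - rewrite (neg_term_contiguousS p b z m); auto. unfold Cdiv. ring. }
  replace A' with (Cmul (Csub Cone b) (Cmul (Cinv (Csub Cone b)) A')) by (field; auto).
  replace B' with (Cmul (Csub Cone b) (Cmul (Cinv (Csub Cone b)) B')) by (field; auto).
  replace (Cmul (Cinv (Csub Cone b)) A') with (Csub A (Cmul (Cdiv b z) (Csub A Cone)))
    by (rewrite EA at 1; ring).
  replace (Cmul (Cinv (Csub Cone b)) B') with (Csub B (Cmul (Cdiv b z) (Cadd Cone B)))
    by (rewrite EB at 1; ring).
  ring.
Qed.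

Lemma rev_poch_bound (p b : Cplx) (bb : R) (n : nat) : Cnorm b <= bb ->
  Cnorm (rev_poch p b n) <= Rprod (fun j => Cnorm p ^ (S j) + bb) n.
Proof.
  intros Hb. induction n; simpl; [rewrite Cnorm_one; lra|].
  rewrite Cnorm_mul. apply Rmult_le_compat; auto; try apply Cnorm_ge0.
  unfold Csub. eapply Rle_trans; [apply Cnorm_triangle|]. rewrite Cnorm_opp, Cnorm_mul, Cnorm_pow. simpl. lra.
Qed.

Lemma neg_term_dom (p z : Cplx) (bb : R) : Cnorm p < 1 -> z <> Czero -> 0 <= bb -> bb * Cnorm (Cinv z) < 1 ->
  exists M th, 0 <= th < 1 /\ forall b m, Cnorm b <= bb -> Cnorm (neg_term p b z m) <= M * th ^ m.
Proof.
  intros Hp Hz Hbb Hw. set (W := Cnorm (Cinv z)) in *.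
  assert (HW : 0 < W) by (unfold W; rewrite Cnorm_inv by auto; apply Rinv_0_lt_compat, Cnorm_pos; auto).
  pose proof (Cnorm_ge0 p).
  set (f := fun j => Cnorm p ^ (S j) + bb).
  assert (Hf : forall j, 0 <= f j) by (intro j; unfold f; assert (0 <= Cnorm p ^ S j) by (apply pow_le; lra); lra).
  set (th := (1 + bb * W) / 2).
  destruct (Rpow_cv0 (Cnorm p) ltac:(lra) ((1 - bb * W) / (2 * (W + 1)))) as [K HK];
    [apply Rdiv_lt_0_compat; lra|].
  destruct (ratio_geo (fun m => W ^ (S m) * Rprod f (S m)) th K) as [M HM].
  - unfold th. nra.
  - intro k. apply Rmult_le_pos; [apply pow_le; lra | apply Rprod_nonneg; auto].
  - intros m Hm. specialize (HK (S (S m)) ltac:(lia)).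
    change (Rprod f (S (S m))) with (Rprod f (S m) * f (S m)).
    assert (0 <= W ^ S m * Rprod f (S m)) by (apply Rmult_le_pos; [apply pow_le; lra|apply Rprod_nonneg; auto]).
    replace (W ^ S (S m) * (Rprod f (S m) * f (S m))) with ((W * f (S m)) * (W ^ S m * Rprod f (S m))) by (simpl; ring).
    apply Rmult_le_compat_r; auto. unfold f, th.
    assert (W * Cnorm p ^ S (S m) <= (1 - bb * W) / 2).
    { apply Rle_trans with (W * ((1 - bb * W) / (2 * (W + 1)))); [apply Rmult_le_compat_l; lra|].
      apply Rle_trans with ((W + 1) * ((1 - bb * W) / (2 * (W + 1)))).
      - apply Rmult_le_compat_r; [apply Rlt_le, Rdiv_lt_0_compat|]; lra.
      - right; field; lra. }
    nra.
  - exists M, th. split; [unfold th; nra|]. intros b m Hb. eapply Rle_trans; [|apply HM].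
    unfold neg_term. rewrite Cnorm_mul, Cnorm_pow, Cnorm_opp. fold W.
    apply Rmult_le_compat_l; [apply pow_le; lra | apply rev_poch_bound; auto].
Qed.

Lemma neg_term_ser (p b z : Cplx) : Cnorm p < 1 -> z <> Czero -> Cnorm b * Cnorm (Cinv z) < 1 ->
  Cser (neg_term p b z) (csum (neg_term p b z)).
Proof.
  intros Hp Hz Hbz. destruct (neg_term_dom p z (Cnorm b) Hp Hz (Cnorm_ge0 b) Hbz) as [M [th [Hth HM]]].
  apply (csum_gdom _ M th); auto. intro k. apply HM. lra.
Qed.

Definition bilateral (p b z : Cplx) : Cplx := Cadd (csum (pos_term p b z)) (csum (neg_term p b z)).

Definition theta (p z : Cplx) : Cplx := bilateral p Czero z.

Lemma qpoch_zero (p : Cplx) (k : nat) : qpoch Czero p k = Cone.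
Proof. induction k; simpl; [|rewrite IHk]; ring. Qed.

Lemma qpoch_cv0 (y : nat -> Cplx) (p : Cplx) (k : nat) : Ccv y Czero -> Ccv (fun N => qpoch (y N) p k) Cone.
Proof.
  intros H. induction k; simpl; [apply Ccv_const|].
  apply (Ccv_eq _ (Cmul Cone (Csub Cone (Cmul Czero (Cpow p k))))); [|ring].
  apply Ccv_mul; [exact IHk|].
  apply (Ccv_sub (fun _ => Cone)); [apply Ccv_const|].
  apply (Ccv_ext (fun N => Cmul (Cpow p k) (y N))); [intros; ring|].
  replace (Cmul Czero (Cpow p k)) with (Cmul (Cpow p k) Czero) by ring. apply Ccv_scal; auto.
Qed.

Lemma rev_poch_cv0 (y : nat -> Cplx) (p : Cplx) (n : nat) : Ccv y Czero ->
  Ccv (fun N => rev_poch p (y N) n) (rev_poch p Czero n).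
Proof.
  intros H. induction n; simpl; [apply Ccv_const|].
  apply Ccv_mul; [exact IHn|]. apply (Ccv_sub (fun _ => _)); [apply Ccv_const | auto].
Qed.

(* Iterating the contiguous relation and letting b p^N -> 0:
   U(b,z) (b;p)_oo (b/z;p)_oo = theta(z). *)
Lemma bilateral_limit (p b z : Cplx) : Cnorm p < 1 -> z <> Czero -> Cnorm b < 1 -> Cnorm b * Cnorm (Cinv z) < 1 ->
  Cmul (bilateral p b z) (Cmul (qinf p b) (qinf p (Cdiv b z))) = theta p z.
Proof.
  intros Hp Hz Hb Hbz. pose proof (Cnorm_ge0 b). pose proof (Cnorm_ge0 (Cinv z)).
  set (bN := fun N => Cmul (Cpow p N) b).
  assert (HbN : forall N, Cnorm (bN N) <= Cnorm b) by (intro; apply Cnorm_mul_pow_le; auto).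
  assert (HbN1 : forall N, Cnorm (bN N) < 1) by (intro N; specialize (HbN N); lra).
  assert (HbNz : forall N, Cnorm (bN N) * Cnorm (Cinv z) < 1) by (intro N; specialize (HbN N); nra).
  assert (Hstep : forall N, bN (S N) = Cmul (bN N) p) by (intro; unfold bN; simpl; ring).
  assert (Hit : forall N, Cmul (bilateral p b z) (Cmul (qpoch b p N) (qpoch (Cdiv b z) p N)) = bilateral p (bN N) z).
  { induction N.
    - unfold bN. simpl. replace (Cmul Cone b) with b by ring. ring.
    - rewrite Hstep. unfold bilateral at 2.
      rewrite <- (bilateral_contiguous p (bN N) z (csum (pos_term p (bN N) z)) (csum (neg_term p (bN N) z))
         (csum (pos_term p (Cmul (bN N) p) z)) (csum (neg_term p (Cmul (bN N) p) z))); auto.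
      + fold (bilateral p (bN N) z). rewrite <- IHN. simpl. unfold bN, Cdiv. ring.
      + apply one_sub_neq0; auto.
      + intro k. apply qpoch_neq0; auto.
      + apply pos_term_ser; auto.
      + apply neg_term_ser; auto.
      + rewrite <- Hstep. apply pos_term_ser; auto.
      + rewrite <- Hstep. apply neg_term_ser; auto. }
  assert (Hlim : Ccv (fun N => bilateral p (bN N) z) (theta p z)).
  { apply Ccv_add.
    - destruct (pos_term_dom p (Cnorm b) (Cnorm z) Hp ltac:(lra) (Cnorm_ge0 z)) as [M HM].
      apply (Cser_dominated (fun N k => pos_term p (bN N) z k) (pos_term p Czero z) _ _ M (/ 2)); [lra| | | |].
      + intros N k. apply HM; auto; lra.
      + intro k. unfold pos_term, Cdiv. eapply Ccv_eq.
        * apply Ccv_scal, Ccv_inv; [apply qpoch_cv0, Ccv_geometric; auto | exact Cone_neq_Czero].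
        * rewrite qpoch_zero. reflexivity.
      + intro N. apply pos_term_ser; auto.
      + apply pos_term_ser; auto. rewrite Cnorm_zero; lra.
    - destruct (neg_term_dom p z (Cnorm b) Hp Hz ltac:(lra) Hbz) as [M [th [Hth HM]]].
      apply (Cser_dominated (fun N k => neg_term p (bN N) z k) (neg_term p Czero z) _ _ M th); auto.
      + intro k. unfold neg_term. apply Ccv_scal, rev_poch_cv0, Ccv_geometric; auto.
      + intro N. apply neg_term_ser; auto.
      + apply neg_term_ser; auto. rewrite Cnorm_zero; lra. }
  eapply Ccv_unique; [|exact Hlim].
  apply (Ccv_ext _ _ _ Hit). apply Ccv_scal. apply Ccv_mul; apply qinf_spec; auto.
Qed.

(* For b = p the negative-index terms vanish and U(p,z) is Euler's series for (z;p)_oo. *)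
Lemma bilateral_at_p (p z : Cplx) : bilateral p p z = qinf p z.
Proof.
  unfold bilateral, qinf. replace (csum (neg_term p p z)) with Czero; [ring|].
  symmetry. apply csum_eq. eapply Cser_ext; [|exact Cser_zero]. intro k.
  assert (E : rev_poch p p (S k) = Czero).
  { induction k; simpl; [ring|]. simpl in IHk. rewrite IHk. ring. }
  unfold neg_term. rewrite E. ring.
Qed.

Lemma triple_product (p z : Cplx) : Cnorm p < 1 -> z <> Czero -> Cnorm p * Cnorm (Cinv z) < 1 ->
  theta p z = Cmul (qinf p z) (Cmul (qinf p p) (qinf p (Cdiv p z))).
Proof. intros. rewrite <- (bilateral_limit p p z), bilateral_at_p by auto. reflexivity. Qed.

Lemma pos_term_b0 (p z : Cplx) (k : nat) : pos_term p Czero z k = theta_term p z k.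
Proof. unfold pos_term, Cdiv. rewrite qpoch_zero, Cinv_one. ring. Qed.

Lemma rev_poch_zero (p : Cplx) (n : nat) : rev_poch p Czero n = Cpow p (tri (S n)).
Proof.
  induction n; simpl rev_poch; [simpl; ring|]. rewrite IHn.
  change (tri (S (S n))) with (tri (S n) + S n)%nat. rewrite Cpow_add. simpl Cpow. ring.
Qed.

(* theta(-p) = theta(-1): both are sum_(n in Z) p^(n(n+1)/2), indexed differently. *)
Lemma theta_shift (p : Cplx) : Cnorm p < 1 -> p <> Czero -> theta p (Copp p) = theta p (Copp Cone).
Proof.
  intros Hp Hp0. set (f := fun j => Cpow p (tri j)).
  assert (Hp1 : Copp p <> Czero) by (intro E; apply Hp0; replace p with (Copp (Copp p)) by ring; rewrite E; ring).
  assert (H0 : Cnorm Czero < 1) by (rewrite Cnorm_zero; lra).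
  assert (H0z : forall w, Cnorm Czero * Cnorm w < 1) by (intro; rewrite Cnorm_zero; lra).
  assert (HA1 : Cser (fun k => f (S k)) (csum (pos_term p Czero (Copp p)))).
  { eapply Cser_ext; [|apply pos_term_ser; auto]. intro k. rewrite pos_term_b0. unfold theta_term, f.
    simpl tri. rewrite Cpow_add. replace (Copp (Copp p)) with p by ring. ring. }
  assert (HB1 : Cser (fun k => f (S k)) (csum (neg_term p Czero (Copp p)))).
  { eapply Cser_ext; [|apply neg_term_ser; auto]. intro k. unfold neg_term, f. rewrite rev_poch_zero.
    change (tri (S (S k))) with (tri (S k) + S k)%nat. rewrite Cpow_add, Cinv_opp.
    transitivity (Cmul (Cpow p (tri (S k))) (Cmul (Cpow p (S k)) (Cpow (Cinv p) (S k)))); [ring|].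
    rewrite Cpow_cancel0 by auto. ring. }
  assert (HA2 : Cser f (csum (pos_term p Czero (Copp Cone)))).
  { eapply Cser_ext; [|apply pos_term_ser; auto]. intro k. rewrite pos_term_b0. unfold theta_term, f.
    replace (Copp (Copp Cone)) with Cone by ring. rewrite Cpow_one. ring. }
  assert (HB2 : Cser (fun k => f (S (S k))) (csum (neg_term p Czero (Copp Cone)))).
  { eapply Cser_ext; [|apply neg_term_ser; auto; exact Copp_one_neq_Czero]. intro k.
    unfold neg_term, f. rewrite rev_poch_zero, Cinv_opp, Cinv_one, Cpow_one. ring. }
  pose proof (Cser_unique _ _ _ HA1 (Cser_shift _ _ HA2)) as E1.
  pose proof (Cser_unique _ _ _ HB2 (Cser_shift _ _ HB1)) as E2.
  unfold theta, bilateral. rewrite E1, E2. unfold f. simpl. ring.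
Qed.

Lemma qinf_plus_minus (q p p2 : Cplx) : p = Cmul q q -> p2 = Cmul p p -> Cnorm p < 1 -> Cnorm p2 < 1 ->
  Cmul (qinf p q) (qinf p (Copp q)) = qinf p2 p.
Proof.
  intros Hp Hp2 H1 H2. eapply Ccv_unique; [|apply (qinf_spec p2 p H2)].
  apply (Ccv_ext (fun N => Cmul (qpoch q p N) (qpoch (Copp q) p N))); [|apply Ccv_mul; apply qinf_spec; auto].
  intro N. subst p2. induction N; simpl qpoch; [ring|]. rewrite <- IHN, Cpow_mul, Hp. ring.
Qed.

Lemma qpoch_even (p p2 : Cplx) (N : nat) : p2 = Cmul p p ->
  qpoch p p (2 * N) = Cmul (qpoch p p2 N) (qpoch p2 p2 N).
Proof.
  intros Hp2. subst p2. induction N; [simpl; ring|].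
  replace (2 * S N)%nat with (S (S (2 * N))) by lia.
  change (qpoch p p (S (S (2 * N)))) with (Cmul (Cmul (qpoch p p (2 * N)) (Csub Cone (Cmul p (Cpow p (2 * N)))))
    (Csub Cone (Cmul p (Cpow p (S (2 * N)))))).
  rewrite IHN. simpl qpoch. rewrite Cpow_mul. replace (2 * N)%nat with (N + N)%nat by lia.
  simpl Cpow. rewrite !Cpow_add. ring.
Qed.

Lemma qinf_even (p p2 : Cplx) : p2 = Cmul p p -> Cnorm p < 1 -> Cnorm p2 < 1 ->
  qinf p p = Cmul (qinf p2 p) (qinf p2 p2).
Proof.
  intros Hp2 H1 H2. eapply Ccv_unique.
  - apply (Ccv_subseq _ _ (fun n => (2 * n)%nat) ltac:(intro n; cbv beta; lia) (qinf_spec p p H1)).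
  - apply (Ccv_ext (fun N => Cmul (qpoch p p2 N) (qpoch p2 p2 N))); [intro; symmetry; apply qpoch_even; auto|].
    apply Ccv_mul; apply qinf_spec; auto.
Qed.

Lemma pos_sum_contiguous (p b z : Cplx) : z <> Czero -> Cnorm p < 1 -> Cnorm b < 1 -> Cnorm (Cmul b p) < 1 ->
  csum (pos_term p b z) = Cadd (Cmul (Cinv (Csub Cone b)) (csum (pos_term p (Cmul b p) z)))
                               (Cmul (Cdiv b z) (Csub (csum (pos_term p b z)) Cone)).
Proof.
  intros Hz Hp Hb Hbp. pose proof (pos_term_ser p b z Hp Hb) as HA.
  pose proof (pos_term_ser p (Cmul b p) z Hp Hbp) as HA'.
  pose proof (Cser_shift _ _ HA) as HA1. rewrite pos_term_index0 in HA1.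
  apply (Cser_unique (pos_term p b z)); auto.
  eapply Cser_ext; [|exact (Cser_add _ _ _ _ (Cser_scal _ _ (Cinv (Csub Cone b)) HA')
                                            (Cser_scal _ _ (Cdiv b z) HA1))].
  intro k. cbv beta. rewrite (pos_term_contiguous p b z k); [unfold Cdiv; ring|auto|..].
  - apply qpoch_neq0; auto.
  - apply one_sub_neq0; auto.
Qed.

(* Cesaro summation.  A bounded series whose "paired" series
   sum_m (s_m + s_(m-1)) (with s_(-1) = a) converges to L is Cesaro summable to (L - a)/2. *)

Definition cmean (N : nat) (X : Cplx) : Cplx := Cmul (RtoC (/ INR (S N))) X.

Lemma Cnorm_cmean (N : nat) (X : Cplx) : Cnorm (cmean N X) = / INR (S N) * Cnorm X.
Proof.
  unfold cmean. rewrite Cnorm_mul, Cnorm_RtoC, Rabs_right; auto.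
  apply Rle_ge, Rlt_le, Rinv_0_lt_compat, lt_0_INR; lia.
Qed.

Lemma Ccesaro_ext (f g : nat -> Cplx) (l : Cplx) : (forall k, f k = g k) -> Ccesaro f l -> Ccesaro g l.
Proof.
  intros H H1. eapply Ccv_ext; [|exact H1]. intro N. cbv beta.
  f_equal. apply Csum_ext. intro. apply Csum_ext. auto.
Qed.

Lemma Csum_norm (d : nat -> Cplx) (N : nat) : Cnorm (Csum d N) <= Rsum (fun M => Cnorm (d M)) (S N).
Proof. induction N; simpl in *; [lra|]. eapply Rle_trans; [apply Cnorm_triangle | lra]. Qed.

Lemma Rsum_tail_bound (f : nat -> R) (K : nat) (e : R) : (forall M, (M >= K)%nat -> f M <= e) ->
  forall n, Rsum f (K + n) <= Rsum f K + INR n * e.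
Proof.
  intros H n; induction n; [rewrite Nat.add_0_r; simpl; lra|].
  rewrite Nat.add_succ_r. simpl Rsum. rewrite S_INR. specialize (H (K + n)%nat ltac:(lia)). lra.
Qed.

Lemma cesaro_regular (P : nat -> Cplx) (L : Cplx) : Ccv P L -> Ccv (fun N => cmean N (Csum P N)) L.
Proof.
  intros H e He. destruct (H (e / 3) ltac:(lra)) as [K HK].
  set (C := Rsum (fun M => Cnorm (Csub (P M) L)) K).
  assert (HC : 0 <= C) by (apply Rsum_nonneg; intro; apply Cnorm_ge0).
  destruct (INR_archimed (e / 3) C ltac:(lra)) as [N0 HN0].
  exists (N0 + K)%nat. intros N HN.
  replace (Csub (cmean N (Csum P N)) L) with (cmean N (Csum (fun M => Csub (P M) L) N)).
  2:{ unfold cmean. rewrite Csum_sub, Csum_const.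
      transitivity (Csub (Cmul (RtoC (/ INR (S N))) (Csum P N))
                         (Cmul (RtoC (/ INR (S N) * INR (S N))) L)); [rewrite RtoC_mul; ring|].
      rewrite Rinv_l by (apply not_0_INR; lia). change (RtoC 1) with Cone. ring. }
  rewrite Cnorm_cmean. set (n := INR (S N)).
  assert (Hn : INR N0 <= n) by (apply le_INR; lia).
  assert (Hn0 : 0 < n) by (apply lt_0_INR; lia).
  pose proof (Csum_norm (fun M => Csub (P M) L) N) as H1.
  pose proof (Rsum_tail_bound (fun M => Cnorm (Csub (P M) L)) K (e / 3)
    ltac:(intros M HM; left; apply HK; lia) (S N - K)) as H2.
  replace (K + (S N - K))%nat with (S N) in H2 by lia. fold C in H2.
  assert (INR (S N - K) <= n) by (apply le_INR; lia).
  assert (Cnorm (Csum (fun M => Csub (P M) L) N) <= C + n * (e / 3)) by nra.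
  apply Rle_lt_trans with (/ n * (C + n * (e / 3))).
  { apply Rmult_le_compat_l; auto. apply Rlt_le, Rinv_0_lt_compat; auto. }
  replace (/ n * (C + n * (e / 3))) with (C / n + e / 3) by (field; lra).
  assert (C / n < e / 3).
  { apply (Rmult_lt_reg_r n); auto. unfold Rdiv. rewrite Rmult_assoc, Rinv_l by lra. nra. }
  lra.
Qed.

Lemma cmean_bounded (Sq : nat -> Cplx) (B : R) : (forall N, Cnorm (Sq N) <= B) ->
  Ccv (fun N => cmean N (Sq N)) Czero.
Proof.
  intros HB e He. destruct (INR_archimed e (Rabs B) He) as [N0 HN0]. exists N0. intros N HN.
  replace (Csub (cmean N (Sq N)) Czero) with (cmean N (Sq N)) by ring.
  rewrite Cnorm_cmean. set (n := INR (S N)).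
  assert (Hn : INR N0 <= n) by (apply le_INR; lia).
  assert (Hn0 : 0 < n) by (apply lt_0_INR; lia).
  specialize (HB N). pose proof (Rle_abs B).
  apply Rle_lt_trans with (/ n * Rabs B).
  { apply Rmult_le_compat_l; [apply Rlt_le, Rinv_0_lt_compat; auto | lra]. }
  apply (Rmult_lt_reg_l n); auto. rewrite <- Rmult_assoc, Rinv_r, Rmult_1_l by lra. nra.
Qed.

Lemma pair_sum (s : nat -> Cplx) (a : Cplx) (M : nat) :
  Csum (fun m => Cadd (s m) (prep a s m)) M = Cadd (Csub (Cadd (Csum s M) (Csum s M)) (s M)) a.
Proof. induction M; [simpl; ring|]. simpl Csum. rewrite IHM. simpl prep. ring. Qed.

Lemma cesaro_pair (s : nat -> Cplx) (a L : Cplx) (Bs : R) : (forall m, Cnorm (s m) <= Bs) ->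
  Cser (fun m => Cadd (s m) (prep a s m)) L -> Ccesaro s (Cmul (RtoC (/ 2)) (Csub L a)).
Proof.
  intros Hs HL. unfold Ccesaro. set (P := Csum (fun m => Cadd (s m) (prep a s m))).
  assert (HS : forall M, Csum s M = Cmul (RtoC (/ 2)) (Cadd (Csub (P M) a) (s M))).
  { intro M. unfold P. rewrite pair_sum.
    replace (Cadd (Csub (Cadd (Csub (Cadd (Csum s M) (Csum s M)) (s M)) a) a) (s M))
      with (Cadd (Csum s M) (Csum s M)) by ring.
    rewrite half_double. auto. }
  destruct (Ccv_bounded P L HL) as [BP HBP].
  assert (HSb : forall N, Cnorm (Csum s N) <= / 2 * (BP + Cnorm a + Bs)).
  { intro N. rewrite HS, Cnorm_mul, Cnorm_RtoC, Rabs_right by lra.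
    apply Rmult_le_compat_l; [lra|]. eapply Rle_trans; [apply Cnorm_triangle|]. unfold Csub.
    pose proof (Cnorm_triangle (P N) (Copp a)). rewrite Cnorm_opp in *.
    specialize (HBP N). specialize (Hs N). lra. }
  apply (Ccv_ext (fun N => Cmul (RtoC (/ 2))
    (Cadd (cmean N (Csum (fun M => Csub (P M) a) N)) (cmean N (Csum s N))))).
  { intro N. unfold cmean.
    rewrite (Csum_ext (Csum s) (fun M => Cmul (RtoC (/ 2)) (Cadd (Csub (P M) a) (s M))) N HS).
    rewrite Csum_scal, Csum_add. ring. }
  apply (Ccv_eq _ (Cmul (RtoC (/ 2)) (Cadd (Csub L a) Czero))); [|f_equal; ring].
  apply Ccv_scal, Ccv_add.
  - apply cesaro_regular. apply (Ccv_sub P (fun _ => a)); [exact HL | apply Ccv_const].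
  - apply (cmean_bounded _ _ HSb).
Qed.

Lemma qpochZ_nat (a p : Cplx) (n : nat) : qpochZ a p (Z.of_nat n) = qpoch a p n.
Proof. destruct n; [reflexivity|]. unfold qpochZ. simpl. rewrite SuccNat2Pos.id_succ. reflexivity. Qed.

Lemma qpochZ_neg (a p : Cplx) (m : nat) :
  qpochZ a p (- Z.of_nat (S m))%Z = Cinv (qpoch (Cmul a (Cpow (Cinv p) (S m))) p (S m)).
Proof. unfold qpochZ. simpl. rewrite SuccNat2Pos.id_succ. reflexivity. Qed.

Lemma qpoch_rev (p v a : Cplx) (n : nat) : Cmul v p = Cone ->
  qpoch (Cmul a (Cpow v n)) p n = Cmul (Cpow v (tri (S n))) (rev_poch p a n).
Proof.
  intros Hv. induction n; [simpl; ring|].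
  rewrite qpoch_shift. replace (Cmul (Cmul a (Cpow v (S n))) p) with (Cmul a (Cpow v n)).
  2:{ simpl. transitivity (Cmul (Cmul a (Cpow v n)) (Cmul v p)); [rewrite Hv | ]; ring. }
  rewrite IHn. simpl tri. simpl rev_poch. rewrite !Cpow_add.
  assert (Hvp : Cmul (Cpow v n) (Cpow p n) = Cone) by (rewrite <- Cpow_mul, Hv; apply Cpow_one).
  transitivity (Cmul (Cmul (Cpow v (tri n)) (Cpow v n)) (Cmul (rev_poch p a n)
     (Csub (Cmul (Cmul v p) (Cmul (Cpow v n) (Cpow p n))) (Cmul a (Cmul v (Cpow v n)))))).
  - rewrite Hvp, Hv. simpl. ring.
  - simpl. ring.
Qed.

Lemma rev_poch_m1 (p : Cplx) (n : nat) : rev_poch p (Copp Cone) n = qpoch (Copp p) p n.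
Proof. induction n; simpl; [|rewrite IHn]; ring. Qed.

Lemma rev_poch_q (q p : Cplx) (n : nat) : p = Cmul q q ->
  rev_poch p q n = Cmul (Cpow (Copp q) n) (qpoch q p n).
Proof. intros Hp; induction n; simpl; [ring|]. rewrite IHn, Hp. ring. Qed.

Lemma rev_poch_mq (q p : Cplx) (n : nat) : p = Cmul q q ->
  rev_poch p (Copp q) n = Cmul (Cpow q n) (qpoch (Copp q) p n).
Proof. intros Hp; induction n; simpl; [ring|]. rewrite IHn, Hp. ring. Qed.

Lemma pow_sq (q : Cplx) (n : nat) : Cpow q (n * n) = theta_term (Cpow q 2) (Copp q) n.
Proof.
  unfold theta_term. replace (Copp (Copp q)) with q by ring. rewrite <- Cpow_pow, <- Cpow_add.
  f_equal. pose proof (tri_double n). lia.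
Qed.

Lemma pow_sq_plus (q : Cplx) (n : nat) : Cpow q (n * n + n) = theta_term (Cpow q 2) (Copp (Cpow q 2)) n.
Proof.
  unfold theta_term. replace (Copp (Copp (Cpow q 2))) with (Cpow q 2) by ring.
  rewrite <- !Cpow_pow, <- Cpow_add. f_equal. pose proof (tri_double n). lia.
Qed.

Lemma inv_sq_pow (q : Cplx) (k : nat) : q <> Czero -> Cpow (Cinv (Cpow q 2)) k = Cpow (Cinv q) (2 * k).
Proof. intros. rewrite Cpow_pow. f_equal. simpl. field. auto. Qed.

Lemma inv_sq_mul (q : Cplx) : q <> Czero -> Cmul (Cinv (Cpow q 2)) (Cpow q 2) = Cone.
Proof. intros. apply Cinv_l, Cpow_neq0; auto. Qed.

Definition sq_term (q a : Cplx) (n : Z) : Cplx :=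
  Cdiv (Cpow q (Z.to_nat (n * n))) (qpochZ a (Cpow q 2) n).

Lemma sq_term_pos (q a : Cplx) (n : nat) : sq_term q a (Z.of_nat n) = pos_term (Cpow q 2) a (Copp q) n.
Proof. unfold sq_term. rewrite <- Nat2Z.inj_mul, Nat2Z.id, qpochZ_nat, pow_sq. reflexivity. Qed.

Lemma sq_term_neg (q a : Cplx) (m : nat) : q <> Czero ->
  sq_term q a (- Z.of_nat (S m)) = neg_term (Cpow q 2) a (Copp q) m.
Proof.
  intros Hq. unfold sq_term.
  replace ((- Z.of_nat (S m)) * (- Z.of_nat (S m)))%Z with (Z.of_nat (S m * S m)) by (rewrite Nat2Z.inj_mul; ring).
  rewrite Nat2Z.id, qpochZ_neg. unfold Cdiv. rewrite Cinv_inv.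
  rewrite (qpoch_rev (Cpow q 2) (Cinv (Cpow q 2))) by (apply inv_sq_mul; auto).
  unfold neg_term. rewrite Cinv_opp, inv_sq_pow by auto.
  replace (2 * tri (S (S m)))%nat with (S m * S m + S m)%nat by (pose proof (tri_double (S (S m))); simpl in *; lia).
  transitivity (Cmul (Cmul (Cpow q (S m * S m)) (Cpow (Cinv q) (S m * S m + S m))) (rev_poch (Cpow q 2) a (S m))).
  - ring.
  - rewrite Cpow_cancel by auto. reflexivity.
Qed.

(* The second bilateral series is U(-q^3, -q^2) / (1 + q). *)
Lemma bil2_pos (q : Cplx) (n : nat) : Cnorm q < 1 -> bil2 q (Z.of_nat n) =
  Cmul (Cinv (Cadd Cone q)) (pos_term (Cpow q 2) (Cmul (Copp q) (Cpow q 2)) (Copp (Cpow q 2)) n).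
Proof.
  intros Hq. unfold bil2.
  replace (Z.of_nat n * Z.of_nat n + Z.of_nat n)%Z with (Z.of_nat (n * n + n)) by (rewrite Nat2Z.inj_add, Nat2Z.inj_mul; ring).
  replace (Z.of_nat n + 1)%Z with (Z.of_nat (S n)) by lia.
  rewrite Nat2Z.id, qpochZ_nat, qpoch_shift. unfold pos_term. rewrite pow_sq_plus.
  assert (Hq2 : Cnorm (Cpow q 2) < 1) by (rewrite Cnorm_pow; pose proof (Cnorm_ge0 q); simpl; nra).
  assert (qpoch (Cmul (Copp q) (Cpow q 2)) (Cpow q 2) n <> Czero).
  { apply qpoch_neq0; auto. rewrite Cnorm_mul, Cnorm_opp. pose proof (Cnorm_ge0 q).
    pose proof (Cnorm_ge0 (Cpow q 2)). nra. }
  pose proof (one_add_neq0 q Hq).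
  replace (Csub Cone (Copp q)) with (Cadd Cone q) by ring. field. auto.
Qed.

Lemma bil2_neg_rev (q : Cplx) (m : nat) : q <> Czero ->
  bil2 q (- Z.of_nat (S m))%Z = rev_poch (Cpow q 2) (Copp q) m.
Proof.
  intros Hq. unfold bil2.
  replace ((- Z.of_nat (S m)) * (- Z.of_nat (S m)) + - Z.of_nat (S m))%Z with (Z.of_nat (m * S m))
    by (rewrite Nat2Z.inj_mul, Nat2Z.inj_succ; ring).
  replace (- Z.of_nat (S m) + 1)%Z with (- Z.of_nat m)%Z by lia.
  rewrite Nat2Z.id. destruct m as [|m].
  - simpl. unfold Cdiv. rewrite Cinv_one. ring.
  - rewrite qpochZ_neg. unfold Cdiv. rewrite Cinv_inv.
    rewrite (qpoch_rev (Cpow q 2) (Cinv (Cpow q 2))) by (apply inv_sq_mul; auto).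
    rewrite inv_sq_pow by auto.
    replace (2 * tri (S (S m)))%nat with (S m * S (S m) + 0)%nat by (pose proof (tri_double (S (S m))); simpl in *; lia).
    transitivity (Cmul (Cmul (Cpow q (S m * S (S m))) (Cpow (Cinv q) (S m * S (S m) + 0)))
                       (rev_poch (Cpow q 2) (Copp q) (S m))); [ring|].
    rewrite Cpow_cancel by auto. simpl. ring.
Qed.

Lemma neg_term_bil2 (q : Cplx) (m : nat) : Cnorm q < 1 -> q <> Czero ->
  Cmul (Cinv (Cadd Cone q)) (neg_term (Cpow q 2) (Cmul (Copp q) (Cpow q 2)) (Copp (Cpow q 2)) m)
  = rev_poch (Cpow q 2) (Copp q) m.
Proof.
  intros Hq Hq0. unfold neg_term. rewrite rev_poch_shift, Cinv_opp.
  assert (Hp : Cpow q 2 <> Czero) by (apply Cpow_neq0; auto).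
  pose proof (one_add_neq0 q Hq). pose proof (Cpow_cancel0 (Cpow q 2) (S m) Hp) as E.
  replace (Csub Cone (Copp q)) with (Cadd Cone q) by ring.
  transitivity (Cmul (Cmul (Cinv (Cadd Cone q)) (Cadd Cone q))
    (Cmul (Cmul (Cpow (Cpow q 2) (S m)) (Cpow (Cinv (Cpow q 2)) (S m))) (rev_poch (Cpow q 2) (Copp q) m))); [ring|].
  rewrite E. field. auto.
Qed.

Lemma r_series1_term (q : Cplx) (r : nat) : q <> Czero ->
  Cmul (qpoch (Copp Cone) (Cpow q 2) (S r)) (Cpow q (S r)) = neg_term (Cpow q 2) (Copp (Cpow q 2)) (Copp q) r.
Proof.
  intros Hq. unfold neg_term. replace (Copp (Cpow q 2)) with (Cmul (Copp Cone) (Cpow q 2)) by ring.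
  rewrite rev_poch_shift, qpoch_shift, rev_poch_m1.
  replace (Cmul (Copp Cone) (Cpow q 2)) with (Copp (Cpow q 2)) by ring.
  rewrite Cinv_opp, <- Cpow_pow. replace (2 * S r)%nat with (S r + S r)%nat by lia. rewrite Cpow_add.
  transitivity (Cmul (Cmul (Cpow q (S r)) (Cpow (Cinv q) (S r)))
    (Cmul (Cpow q (S r)) (Cmul (Csub Cone (Copp Cone)) (qpoch (Copp (Cpow q 2)) (Cpow q 2) r)))).
  - rewrite Cpow_cancel0 by auto. ring.
  - ring.
Qed.

Lemma r_series3_term (q : Cplx) (m : nat) : q <> Czero ->
  Cmul (qpoch q (Cpow q 2) (S m)) (Cpow (Copp Cone) (S m)) = neg_term (Cpow q 2) q (Copp q) m.
Proof.
  intros Hq. unfold neg_term. rewrite (rev_poch_q q (Cpow q 2)) by (simpl; ring).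
  rewrite Cinv_opp.
  transitivity (Cmul (Cpow (Cmul (Cinv q) (Copp q)) (S m)) (qpoch q (Cpow q 2) (S m))).
  - replace (Cmul (Cinv q) (Copp q)) with (Copp Cone) by (field; auto). ring.
  - rewrite Cpow_mul. ring.
Qed.

Lemma phi_term_eq (q : Cplx) (n : nat) : phi_term q n = pos_term (Cpow q 2) (Copp (Cpow q 2)) (Copp q) n.
Proof. unfold phi_term, pos_term. rewrite pow_sq. reflexivity. Qed.

Lemma psi_term_eq (q : Cplx) (k : nat) : psi_term q k = pos_term (Cpow q 2) q (Copp q) (S k).
Proof. unfold psi_term, pos_term. rewrite pow_sq. reflexivity. Qed.

Lemma nu_term_eq (q : Cplx) (n : nat) : Cnorm q < 1 -> nu_term q n =
  Cmul (Cinv (Cadd Cone q)) (pos_term (Cpow q 2) (Cmul (Copp q) (Cpow q 2)) (Copp (Cpow q 2)) n).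
Proof.
  intros Hq. rewrite <- bil2_pos by auto. unfold nu_term, bil2.
  replace (Z.of_nat n * Z.of_nat n + Z.of_nat n)%Z with (Z.of_nat (n * n + n)) by (rewrite Nat2Z.inj_add, Nat2Z.inj_mul; ring).
  replace (Z.of_nat n + 1)%Z with (Z.of_nat (S n)) by lia. rewrite Nat2Z.id, qpochZ_nat. reflexivity.
Qed.

Section Identities.
Variable q : Cplx.
Hypothesis hq : Cnorm q < 1.
Hypothesis hq0 : q <> Czero.

Lemma q_pos : 0 < Cnorm q.
Proof. apply Cnorm_pos; auto. Qed.

Lemma q2_norm : Cnorm (Cpow q 2) = Cnorm q * Cnorm q.
Proof. rewrite Cnorm_pow. simpl. ring. Qed.

Lemma q2_lt1 : Cnorm (Cpow q 2) < 1.
Proof. rewrite q2_norm. pose proof q_pos. nra. Qed.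

Lemma q2_neq0 : Cpow q 2 <> Czero.
Proof. apply Cpow_neq0; auto. Qed.

Lemma mq_neq0 : Copp q <> Czero.
Proof. intro E. apply hq0. replace q with (Copp (Copp q)) by ring. rewrite E. ring. Qed.

Lemma inv_mq_norm : Cnorm (Cinv (Copp q)) = / Cnorm q.
Proof. rewrite Cnorm_inv, Cnorm_opp; auto. apply mq_neq0. Qed.

(* |q^2| / |q| < 1, the convergence condition for z = -q and |b| = |q|^2. *)
Lemma q2_over_q : Cnorm (Cpow q 2) * Cnorm (Cinv (Copp q)) < 1.
Proof. rewrite inv_mq_norm, q2_norm. pose proof q_pos. replace (Cnorm q * Cnorm q * / Cnorm q) with (Cnorm q) by (field; lra). lra. Qed.

(* phi(q) + sum_(r>=1) (-1;q^2)_r q^r: U(-q^2,-q) and its two halves. *)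
Lemma identity1 :
  exists Phi Sr Pos Neg A B Cq D : Cplx,
     Cser (phi_term q) Phi /\
     Cser (fun r => Cmul (qpoch (Copp Cone) (Cpow q 2) (S r)) (Cpow q (S r))) Sr /\
     Cser (fun n => bil1 q (Z.of_nat n)) Pos /\
     Cser (fun m => bil1 q (- Z.of_nat (S m))%Z) Neg /\
     qpinf (Copp q) (Cpow q 2) A /\ qpinf (Cpow q 2) (Cpow q 2) B /\
     qpinf q (Cpow q 2) Cq /\ qpinf (Copp (Cpow q 2)) (Cpow q 2) D /\
     Cadd Phi Sr = Cadd Pos Neg /\
     Cadd Pos Neg = Cdiv (Cmul (Cmul A A) B) (Cmul Cq D).
Proof.
  pose proof q2_lt1 as Hp. pose proof q2_over_q as Hpz. pose proof mq_neq0 as Hmq.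
  set (p := Cpow q 2) in *.
  assert (Hb : Cnorm (Copp p) < 1) by (rewrite Cnorm_opp; auto).
  assert (Hbz : Cnorm (Copp p) * Cnorm (Cinv (Copp q)) < 1) by (rewrite Cnorm_opp; auto).
  exists (csum (pos_term p (Copp p) (Copp q))), (csum (neg_term p (Copp p) (Copp q))),
    (csum (pos_term p (Copp p) (Copp q))), (csum (neg_term p (Copp p) (Copp q))),
    (qinf p (Copp q)), (qinf p p), (qinf p q), (qinf p (Copp p)).
  repeat split; try (apply qinf_spec; auto).
  - eapply Cser_ext; [|apply pos_term_ser; auto]. intro n. symmetry. apply phi_term_eq.
  - eapply Cser_ext; [|apply neg_term_ser; auto]. intro r. symmetry. apply r_series1_term; auto.
  - eapply Cser_ext; [|apply pos_term_ser; auto]. intro n. symmetry. apply (sq_term_pos q (Copp p)).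
  - eapply Cser_ext; [|apply neg_term_ser; auto]. intro n. symmetry. apply (sq_term_neg q (Copp p)); auto.
  - (* U(-p,-q) (-p;p)_oo (q;p)_oo = theta(-q) = (-q;p)_oo (p;p)_oo (-q;p)_oo *)
    pose proof (bilateral_limit p (Copp p) (Copp q) Hp Hmq Hb Hbz) as E.
    rewrite (triple_product p (Copp q) Hp Hmq Hpz) in E.
    replace (Cdiv (Copp p) (Copp q)) with q in E by (unfold p; simpl; field; auto).
    replace (Cdiv p (Copp q)) with (Copp q) in E by (unfold p; simpl; field; auto).
    pose proof (qinf_neq0 p (Copp p) Hp Hb). pose proof (qinf_neq0 p q Hp hq).
    apply Cdiv_of_mul in E; [|apply Cmul_neq0; auto].
    change (bilateral p (Copp p) (Copp q) = Cdiv (Cmul (Cmul (qinf p (Copp q)) (qinf p (Copp q))) (qinf p p))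
      (Cmul (qinf p q) (qinf p (Copp p)))).
    rewrite E. field. split; auto.
Qed.

(* The value of U(-q^3,-q^2) / (1 + q): via theta(-q^2) = theta(-1), the triple product,
   (-1;p)_oo = 2 (-p;p)_oo, (-q;p)_oo = (1 + q) (-q^3;p)_oo, (q;p)_oo (-q;p)_oo = (p;q^4)_oo
   and (p;p)_oo = (p;q^4)_oo (q^4;q^4)_oo. *)
Lemma bilateral2_value :
  Cmul (Cinv (Cadd Cone q)) (bilateral (Cpow q 2) (Cmul (Copp q) (Cpow q 2)) (Copp (Cpow q 2)))
  = Cmul (RtoC 2) (Cmul (Cmul (qinf (Cpow q 2) (Copp (Cpow q 2))) (qinf (Cpow q 2) (Copp (Cpow q 2))))
                        (qinf (Cpow q 4) (Cpow q 4))).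
Proof.
  pose proof q2_lt1 as Hp. pose proof q2_neq0 as Hp0. pose proof q2_norm as Hp2. pose proof q_pos.
  pose proof (one_add_neq0 q hq) as H1q.
  assert (Hp4 : Cpow q 4 = Cmul (Cpow q 2) (Cpow q 2)) by ring.
  set (p := Cpow q 2) in *. set (p2 := Cpow q 4) in *. set (b2 := Cmul (Copp q) p).
  assert (Hn2 : Cnorm p2 < 1) by (rewrite Hp4, Cnorm_mul; pose proof (Cnorm_ge0 p); nra).
  assert (Hz2 : Copp p <> Czero) by (intro E; apply Hp0; replace p with (Copp (Copp p)) by ring; rewrite E; ring).
  assert (Hb : Cnorm b2 < 1) by (unfold b2; rewrite Cnorm_mul, Cnorm_opp, Hp2; nra).
  assert (Hbz : Cnorm b2 * Cnorm (Cinv (Copp p)) < 1).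
  { unfold b2. rewrite Cnorm_inv, Cnorm_mul, !Cnorm_opp, Hp2 by auto.
    replace (Cnorm q * (Cnorm q * Cnorm q) * / (Cnorm q * Cnorm q)) with (Cnorm q) by (field; lra). lra. }
  assert (Hpm1 : Cnorm p * Cnorm (Cinv (Copp Cone)) < 1)
    by (rewrite Cnorm_inv, Cnorm_opp, Cnorm_one by exact Copp_one_neq_Czero; lra).
  pose proof (bilateral_limit p b2 (Copp p) Hp Hz2 Hb Hbz) as E.
  replace (Cdiv b2 (Copp p)) with q in E by (unfold b2, p; field; auto).
  rewrite (theta_shift p Hp Hp0), (triple_product p (Copp Cone) Hp Copp_one_neq_Czero Hpm1) in E.
  replace (Cdiv p (Copp Cone)) with (Copp p) in E by (field; exact Copp_one_neq_Czero).
  rewrite (qinf_step p (Copp Cone) Hp) in E. replace (Cmul p (Copp Cone)) with (Copp p) in E by ring.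
  assert (Eb : qinf p b2 = Cdiv (qinf p (Copp q)) (Cadd Cone q)).
  { rewrite (qinf_step p (Copp q) Hp). unfold b2.
    replace (Cmul p (Copp q)) with (Cmul (Copp q) p) by ring. field. auto. }
  assert (qinf p b2 <> Czero) by (apply qinf_neq0; auto).
  assert (qinf p q <> Czero) by (apply qinf_neq0; auto).
  assert (qinf p (Copp q) <> Czero) by (apply qinf_neq0; auto; rewrite Cnorm_opp; auto).
  apply Cdiv_of_mul in E; [|apply Cmul_neq0; auto].
  rewrite E, (qinf_even p p2), <- (qinf_plus_minus q p p2), Eb, RtoC_2 by (auto; unfold p, p2; ring).
  field. repeat split; auto.
Qed.

(* nu(q) + sum_(r>=0) (-q;q^2)_r q^r: U(-q^3,-q^2) / (1 + q). *)
Lemma identity2 :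
  exists Nu Sr Pos Neg D E : Cplx,
     Cser (nu_term q) Nu /\
     Cser (fun r => Cmul (qpoch (Copp q) (Cpow q 2) r) (Cpow q r)) Sr /\
     Cser (fun n => bil2 q (Z.of_nat n)) Pos /\
     Cser (fun m => bil2 q (- Z.of_nat (S m))%Z) Neg /\
     qpinf (Copp (Cpow q 2)) (Cpow q 2) D /\ qpinf (Cpow q 4) (Cpow q 4) E /\
     Cadd Nu Sr = Cadd Pos Neg /\
     Cadd Pos Neg = Cmul (RtoC 2) (Cmul (Cmul D D) E).
Proof.
  pose proof q2_lt1 as Hp. pose proof q2_neq0 as Hp0. pose proof q2_norm as Hp2. pose proof q_pos.
  set (p := Cpow q 2) in *. set (b2 := Cmul (Copp q) p). set (ci := Cinv (Cadd Cone q)).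
  assert (Hn4 : Cnorm (Cpow q 4) < 1)
    by (rewrite Cnorm_pow; simpl; pose proof (Cnorm_ge0 q); rewrite Hp2 in Hp; nra).
  assert (Hz2 : Copp p <> Czero) by (intro E; apply Hp0; replace p with (Copp (Copp p)) by ring; rewrite E; ring).
  assert (Hb : Cnorm b2 < 1) by (unfold b2; rewrite Cnorm_mul, Cnorm_opp, Hp2; nra).
  assert (Hbz : Cnorm b2 * Cnorm (Cinv (Copp p)) < 1).
  { unfold b2. rewrite Cnorm_inv, Cnorm_mul, !Cnorm_opp, Hp2 by auto.
    replace (Cnorm q * (Cnorm q * Cnorm q) * / (Cnorm q * Cnorm q)) with (Cnorm q) by (field; lra). lra. }
  exists (Cmul ci (csum (pos_term p b2 (Copp p)))), (Cmul ci (csum (neg_term p b2 (Copp p)))),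
    (Cmul ci (csum (pos_term p b2 (Copp p)))), (Cmul ci (csum (neg_term p b2 (Copp p)))),
    (qinf p (Copp p)), (qinf (Cpow q 4) (Cpow q 4)).
  repeat split; try (apply qinf_spec; auto).
  - eapply Cser_ext; [|apply Cser_scal, pos_term_ser; auto]. intro n. symmetry. apply nu_term_eq; auto.
  - eapply Cser_ext; [|apply Cser_scal, neg_term_ser; auto]. intro r. unfold ci, b2, p.
    rewrite neg_term_bil2, rev_poch_mq by (auto; simpl; ring). ring.
  - eapply Cser_ext; [|apply Cser_scal, pos_term_ser; auto]. intro n. symmetry. apply bil2_pos; auto.
  - eapply Cser_ext; [|apply Cser_scal, neg_term_ser; auto]. intro n. unfold ci, b2, p.
    rewrite neg_term_bil2, bil2_neg_rev; auto.
  - transitivity (Cmul ci (bilateral p b2 (Copp p))); [unfold bilateral; ring | exact bilateral2_value].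
Qed.

(* The negative half of U(q,-q), paired with its shift (starting from the n = 0 term 1),
   is the convergent series U_-(q^3,-q) / (1 - q). *)
Lemma neg_half3_paired :
  Cser (fun m => Cadd (neg_term (Cpow q 2) q (Copp q) m) (prep Cone (neg_term (Cpow q 2) q (Copp q)) m))
       (Cmul (Cinv (Csub Cone q)) (csum (neg_term (Cpow q 2) (Cmul q (Cpow q 2)) (Copp q)))).
Proof.
  pose proof q2_lt1 as Hp. pose proof q2_norm as Hp2. pose proof mq_neq0 as Hmq. pose proof q_pos.
  assert (H1q : Csub Cone q <> Czero) by (apply one_sub_neq0; auto).
  assert (Hdiv : Cdiv q (Copp q) = Copp Cone) by (field; auto).
  assert (Hbqz : Cnorm (Cmul q (Cpow q 2)) * Cnorm (Cinv (Copp q)) < 1).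
  { rewrite inv_mq_norm, Cnorm_mul, Hp2.
    replace (Cnorm q * (Cnorm q * Cnorm q) * / Cnorm q) with (Cnorm q * Cnorm q) by (field; lra). nra. }
  eapply Cser_ext; [|apply Cser_scal, neg_term_ser; auto]. intros [|m]; cbn [prep].
  - rewrite (neg_term_contiguous0 (Cpow q 2) q (Copp q)), Hdiv by auto. unfold Cdiv. ring.
  - rewrite (neg_term_contiguousS (Cpow q 2) q (Copp q) m), Hdiv by auto. unfold Cdiv. ring.
Qed.

(* The value of U_+(q,-q) + (U_-(q^3,-q) / (1 - q) - 1) / 2, where U_+- are the two halves:
   the positive half satisfies 2 U_+(q,-q) = U_+(q^3,-q) / (1 - q) + 1, and U(q^3,-q) is
   evaluated by the triple product, with (q;p)_oo = (1 - q) (q^3;p)_oo. *)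
Lemma bilateral3_value :
  Cadd (csum (pos_term (Cpow q 2) q (Copp q)))
       (Cmul (RtoC (/ 2)) (Csub (Cmul (Cinv (Csub Cone q)) (csum (neg_term (Cpow q 2) (Cmul q (Cpow q 2)) (Copp q)))) Cone))
  = Cdiv (Cmul (Cmul (qinf (Cpow q 2) (Copp q)) (qinf (Cpow q 2) (Copp q))) (qinf (Cpow q 2) (Cpow q 2)))
         (Cmul (RtoC 2) (Cmul (qinf (Cpow q 2) q) (qinf (Cpow q 2) (Copp (Cpow q 2))))).
Proof.
  pose proof q2_lt1 as Hp. pose proof q2_norm as Hp2. pose proof q2_over_q as Hpz. pose proof mq_neq0 as Hmq.
  pose proof q_pos.
  set (p := Cpow q 2) in *. set (bq := Cmul q p).
  assert (Hbq : Cnorm bq < 1) by (unfold bq; rewrite Cnorm_mul, Hp2; nra).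
  assert (Hbqz : Cnorm bq * Cnorm (Cinv (Copp q)) < 1).
  { unfold bq. rewrite inv_mq_norm, Cnorm_mul, Hp2.
    replace (Cnorm q * (Cnorm q * Cnorm q) * / Cnorm q) with (Cnorm q * Cnorm q) by (field; lra). nra. }
  assert (H1q : Csub Cone q <> Czero) by (apply one_sub_neq0; auto).
  assert (Hb : Cnorm (Copp p) < 1) by (rewrite Cnorm_opp; auto).
  set (Pos3 := csum (pos_term p q (Copp q))).
  set (Ap := csum (pos_term p bq (Copp q))). set (Bp := csum (neg_term p bq (Copp q))).
  assert (EP : Cadd Pos3 Pos3 = Cadd (Cmul (Cinv (Csub Cone q)) Ap) Cone).
  { unfold Pos3 at 1. rewrite (pos_sum_contiguous p q (Copp q) Hmq Hp hq Hbq).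
    replace (Cdiv q (Copp q)) with (Copp Cone) by (field; auto). fold Pos3 bq Ap. ring. }
  pose proof (bilateral_limit p bq (Copp q) Hp Hmq Hbq Hbqz) as E.
  rewrite (triple_product p (Copp q) Hp Hmq Hpz) in E.
  replace (Cdiv bq (Copp q)) with (Copp p) in E by (unfold bq, p; field; auto).
  replace (Cdiv p (Copp q)) with (Copp q) in E by (unfold p; field; auto).
  pose proof (qinf_neq0 p (Copp p) Hp Hb). pose proof (qinf_neq0 p bq Hp Hbq).
  apply Cdiv_of_mul in E; [|apply Cmul_neq0; auto]. unfold bilateral in E. fold Ap Bp in E.
  assert (EG : qinf p q = Cmul (Csub Cone q) (qinf p bq)).
  { rewrite (qinf_step p q Hp). unfold bq. f_equal. f_equal. ring. }
  replace Pos3 with (Cmul (RtoC (/ 2)) (Cadd Pos3 Pos3)) by apply half_double.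
  assert (EA : Ap = Csub (Cadd Ap Bp) Bp) by ring.
  rewrite EP, EA, E, EG, RtoC_half, RtoC_2.
  field. repeat split; auto. exact two_neq_Czero.
Qed.

(* psi(q) + sum_(r>=0) (q;q^2)_r (-1)^r: U(q,-q), whose negative half is Cesaro summed. *)
Lemma identity3 :
  exists Psi Sr Pos Neg A B Cq D : Cplx,
     Cser (psi_term q) Psi /\
     Ccesaro (fun r => Cmul (qpoch q (Cpow q 2) r) (Cpow (Copp Cone) r)) Sr /\
     Cser (fun n => bil3 q (Z.of_nat n)) Pos /\
     Ccesaro (fun m => bil3 q (- Z.of_nat (S m))%Z) Neg /\
     qpinf (Copp q) (Cpow q 2) A /\ qpinf (Cpow q 2) (Cpow q 2) B /\
     qpinf q (Cpow q 2) Cq /\ qpinf (Copp (Cpow q 2)) (Cpow q 2) D /\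
     Cadd Psi Sr = Cadd Pos Neg /\
     Cadd Pos Neg = Cdiv (Cmul (Cmul A A) B) (Cmul (RtoC 2) (Cmul Cq D)).
Proof.
  pose proof q2_lt1 as Hp. pose proof neg_half3_paired as Hpair.
  set (p := Cpow q 2) in *. set (s := neg_term p q (Copp q)) in *.
  set (L := Cmul (Cinv (Csub Cone q)) (csum (neg_term p (Cmul q p) (Copp q)))) in *.
  set (a := fun r => Cmul (qpoch q p r) (Cpow (Copp Cone) r)).
  assert (Has : forall m, a (S m) = s m) by (intro m; apply r_series3_term; auto).
  destruct (qpoch_bounded q p hq Hp) as [Bq HBq].
  assert (Ha : forall r, Cnorm (a r) <= Bq).
  { intro r. unfold a. rewrite Cnorm_mul, Cnorm_pow, Cnorm_opp, Cnorm_one, pow1, Rmult_1_r. auto. }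
  assert (Hs : forall m, Cnorm (s m) <= Bq) by (intro m; rewrite <- Has; auto).
  assert (Hpair_a : Cser (fun r => Cadd (a r) (prep Czero a r)) (Cadd Cone L)).
  { eapply Cser_ext; [|exact (Cser_prep Cone _ _ Hpair)]. intros [|[|m]]; simpl prep.
    - unfold a. simpl. ring.
    - rewrite Has. unfold a. simpl. ring.
    - rewrite !Has. reflexivity. }
  exists (Csub (csum (pos_term p q (Copp q))) Cone), (Cmul (RtoC (/ 2)) (Csub (Cadd Cone L) Czero)),
    (csum (pos_term p q (Copp q))), (Cmul (RtoC (/ 2)) (Csub L Cone)),
    (qinf p (Copp q)), (qinf p p), (qinf p q), (qinf p (Copp p)).
  repeat split; try (apply qinf_spec; auto).
  - pose proof (Cser_shift _ _ (pos_term_ser p q (Copp q) Hp hq)) as Hpsi. rewrite pos_term_index0 in Hpsi.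
    eapply Cser_ext; [|exact Hpsi]. intro k. symmetry. apply psi_term_eq.
  - exact (cesaro_pair a Czero (Cadd Cone L) Bq Ha Hpair_a).
  - eapply Cser_ext; [|apply pos_term_ser; auto]. intro n. symmetry. apply (sq_term_pos q q).
  - eapply Ccesaro_ext; [|exact (cesaro_pair s Cone L Bq Hs Hpair)].
    intro m. symmetry. apply (sq_term_neg q q); auto.
  - rewrite RtoC_half. field. exact two_neq_Czero.
  - exact bilateral3_value.
Qed.

End Identities.

Theorem mainTheorem4 (q : Cplx) (hq : Cnorm q < 1) (hq0 : q <> Czero) :
  (* first identity *)
  (exists Phi Sr Pos Neg A B Cq D : Cplx,
     Cser (phi_term q) Phi /\
     Cser (fun r => Cmul (qpoch (Copp Cone) (Cpow q 2) (S r)) (Cpow q (S r))) Sr /\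
     Cser (fun n => bil1 q (Z.of_nat n)) Pos /\
     Cser (fun m => bil1 q (- Z.of_nat (S m))%Z) Neg /\
     qpinf (Copp q) (Cpow q 2) A /\ qpinf (Cpow q 2) (Cpow q 2) B /\
     qpinf q (Cpow q 2) Cq /\ qpinf (Copp (Cpow q 2)) (Cpow q 2) D /\
     Cadd Phi Sr = Cadd Pos Neg /\
     Cadd Pos Neg = Cdiv (Cmul (Cmul A A) B) (Cmul Cq D)) /\
  (* second identity *)
  (exists Nu Sr Pos Neg D E : Cplx,
     Cser (nu_term q) Nu /\
     Cser (fun r => Cmul (qpoch (Copp q) (Cpow q 2) r) (Cpow q r)) Sr /\
     Cser (fun n => bil2 q (Z.of_nat n)) Pos /\
     Cser (fun m => bil2 q (- Z.of_nat (S m))%Z) Neg /\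
     qpinf (Copp (Cpow q 2)) (Cpow q 2) D /\ qpinf (Cpow q 4) (Cpow q 4) E /\
     Cadd Nu Sr = Cadd Pos Neg /\
     Cadd Pos Neg = Cmul (RtoC 2) (Cmul (Cmul D D) E)) /\
  (* third identity: the series over r, and the negative-index half of the
     bilateral series, are summed in the Cesaro sense *)
  (exists Psi Sr Pos Neg A B Cq D : Cplx,
     Cser (psi_term q) Psi /\
     Ccesaro (fun r => Cmul (qpoch q (Cpow q 2) r) (Cpow (Copp Cone) r)) Sr /\
     Cser (fun n => bil3 q (Z.of_nat n)) Pos /\
     Ccesaro (fun m => bil3 q (- Z.of_nat (S m))%Z) Neg /\
     qpinf (Copp q) (Cpow q 2) A /\ qpinf (Cpow q 2) (Cpow q 2) B /\
     qpinf q (Cpow q 2) Cq /\ qpinf (Copp (Cpow q 2)) (Cpow q 2) D /\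
     Cadd Psi Sr = Cadd Pos Neg /\
     Cadd Pos Neg = Cdiv (Cmul (Cmul A A) B) (Cmul (RtoC 2) (Cmul Cq D))).
Proof.
  split; [|split].
  - exact (identity1 q hq hq0).
  - exact (identity2 q hq hq0).
  - exact (identity3 q hq hq0).
Qed.
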